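(* Consider the threshold delay system (the ''TDE model'') described in the context, with the quantities $N_{T1}$, $P_2^*$, $N_{T2}$, $N_1^*$, $P_1^*$ defined there. If $N_{T1}<N_T<N_{T2}$, then the equilibrium $E_1=(N_1^*,P_1^*,0)^T$ is asymptotically stable, in the following sense: for every $\varepsilon>0$ there is a neighbourhood $\mathcal{N}_\varepsilon$ of $E_1$ such that whenever $(\phi_1,\phi_2,\phi_3)\in D_{N_T}\cap\mathcal{N}_\varepsilon$, the solution $(N,P,Z)^T$ of the corresponding initial value problem satisfies $\|(N(t),P(t),Z(t))^T-E_1\|<\varepsilon$ for all $t\ge t_0$ and $\lim_{t\to\infty}(N(t),P(t),Z(t))^T=E_1$.
   Context: Standing assumptions: constants $\mu>\lambda>0$, $g>0$, $\gamma\in(0,1]$, $\delta>0$ with $\gamma g>\delta$, $\delta_0\ge 0$, $m>0$, $N_T>0$. The functions $f,h:[0,\infty)\to[0,\infty)$ are $C^1$ with $f(0)=0$, $f'>0$, $\lim_{N\to\infty}f(N)=1$ and $h(0)=0$, $h'>0$, $\lim_{P\to\infty}h(P)=1$. The function $R:[0,\infty)\to[0,\infty)$ is $C^1$ with $R\ge0$, $R'\ge0$, $R'(0)>0$ if $R(0)=0$, $\lim_{P\to\infty}R(P)=R_\infty<\infty$. For a function $P$ and $s\in[0,m]$, the delay $\tau(s,P_t)\ge0$ is defined implicitly by $\int_{-\tau(s,P_t)}^0 R(P(t+u))\,du=s$. TDE model, for $t\ge t_0$: $$N'(t)=-\mu P f(N)+\lambda P+\delta Z+(1-\gamma)gZh(P)+\delta_0(N_T-N-P-Z),$$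 $$P'(t)=\mu P f(N)-\lambda P-gZh(P),$$ $$Z'(t)=R(P(t))e^{-\delta_0\tau(m,P_t)}\frac{\gamma g Z(t-\tau(m,P_t))h(P(t-\tau(m,P_t)))}{R(P(t-\tau(m,P_t)))}-\delta Z(t),$$ with initial conditions $N(t_0+t)=\phi_1(t)$, $P(t_0+t)=\phi_2(t)$, $Z(t_0+t)=\phi_3(t)$ for $t\in[-t_0,0]$. $D_{N_T}$ is the set of triples $(\phi_1,\phi_2,\phi_3)$ of continuous functions on $[-t_0,0]$ (some $t_0>0$) with $\phi_i>0$, $\int_{-t_0}^0R(\phi_2(u))\,du=m$, and $$N_T=\phi_1(0)+\phi_2(0)+\phi_3(0)+\int_0^m e^{-\delta_0\tau(s,\phi_2)}\frac{\gamma g\,\phi_3(-\tau(s,\phi_2))h(\phi_2(-\tau(s,\phi_2)))}{R(\phi_2(-\tau(s,\phi_2)))}\,ds,$$ where $\tau(s,\phi_2)\in[0,t_0]$ solves $\int_{-\tau(s,\phi_2)}^0R(\phi_2(u))\,du=s$. Neighbourhoods of the constant triple $E_1$ are taken with respect to the sup norm of the initial functions. Define $N_{T1}=f^{-1}(\lambda/\mu)$, $N_1^*=N_{T1}$, $P_1^*=N_T-N_{T1}$. Let $P_2^*>0$ be the unique positive solution of $\gamma g\,e^{-\delta_0 m/R(P)}h(P)=\delta$ (it exists if $\delta_0=0$, or if $\delta_0>0$ and $m<R_\infty\ln(\gamma g/\delta)/\delta_0$; this is assumed), and $N_{T2}=N_{T1}+P_2^*$. *)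

From Stdlib Require Import Reals ClassicalEpsilon.
From Coquelicot Require Import Coquelicot.
Open Scope R_scope.

Definition C1_nonneg (f df : R -> R) : Prop :=
  (forall x, 0 < x -> is_derive f x (df x)) /\
  filterlim (fun y => (f y - f 0) / y) (at_right 0) (locally (df 0)) /\
  (forall x, 0 <= x ->
     filterlim df (within (fun y => 0 <= y) (locally x)) (locally (df x))).

Definition continuous_on_interval (a b : R) (phi : R -> R) : Prop :=
  forall x, a <= x <= b ->
    filterlim phi (within (fun y => a <= y <= b) (locally x)) (locally (phi x)).

Definition continuous_from (a : R) (phi : R -> R) : Prop :=
  forall x, a <= x ->
    filterlim phi (within (fun y => a <= y) (locally x)) (locally (phi x)).

(* The implicitly defined delay: for a history [hist] (a function of u <= 0,
   meaningful on [-a, 0]), [delay Rr a hist s] is the tau in [0,a] with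
     int_{-tau}^0 Rr (hist u) du = s
   (chosen by Hilbert's epsilon; it is unique whenever Rr o hist > 0). *)
Definition delay (Rr : R -> R) (a : R) (hist : R -> R) (s : R) : R :=
  epsilon (inhabits 0)
    (fun tau => 0 <= tau <= a /\ RInt (fun u => Rr (hist u)) (- tau) 0 = s).

Definition in_D (g gamma delta0 m NT : R) (h Rr : R -> R)
    (t0 : R) (phi1 phi2 phi3 : R -> R) : Prop :=
  0 < t0 /\
  continuous_on_interval (- t0) 0 phi1 /\
  continuous_on_interval (- t0) 0 phi2 /\
  continuous_on_interval (- t0) 0 phi3 /\
  (forall u, - t0 <= u <= 0 -> 0 < phi1 u /\ 0 < phi2 u /\ 0 < phi3 u) /\
  RInt (fun u => Rr (phi2 u)) (- t0) 0 = m /\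
  NT = phi1 0 + phi2 0 + phi3 0 +
       RInt (fun s =>
               let tau := delay Rr t0 phi2 s in
               exp (- delta0 * tau) * gamma * g * phi3 (- tau) * h (phi2 (- tau))
               / Rr (phi2 (- tau))) 0 m.

(* (N,P,Z) is a solution on [t0, +oo) of the TDE model with initial data
   N(t0+t) = phi1 t, P(t0+t) = phi2 t, Z(t0+t) = phi3 t for t in [-t0,0]
   (so the history lives on [0,t0]); the delay tau(m, P_t) at time t >= t0
   is computed from the history u |-> P(t+u), u in [-t,0]. *)
Definition is_TDE_solution (mu lambda g gamma delta delta0 m NT : R)
    (f h Rr : R -> R) (t0 : R) (phi1 phi2 phi3 : R -> R)
    (N P Z : R -> R) : Prop :=
  (forall t, - t0 <= t <= 0 ->
     N (t0 + t) = phi1 t /\ P (t0 + t) = phi2 t /\ Z (t0 + t) = phi3 t) /\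
  continuous_from 0 N /\ continuous_from 0 P /\ continuous_from 0 Z /\
  (forall t, t0 < t ->
     let tau := delay Rr t (fun u => P (t + u)) m in
     is_derive N t
       (- mu * P t * f (N t) + lambda * P t + delta * Z t
        + (1 - gamma) * g * Z t * h (P t)
        + delta0 * (NT - N t - P t - Z t)) /\
     is_derive P t
       (mu * P t * f (N t) - lambda * P t - g * Z t * h (P t)) /\
     is_derive Z t
       (Rr (P t) * exp (- delta0 * tau)
          * (gamma * g * Z (t - tau) * h (P (t - tau)) / Rr (P (t - tau)))
        - delta * Z t)).

(* While [P] stays within [rho] of [P1 = N_T - N_T1], the [Z]-equation is a linear delay
   inequality [|Z' + delta Z| <= c |Z (t - tau)|], and [c < delta] for small [rho] precisely
   because [N_T < N_T2]; a Razumikhin (Halanay) argument gives exponential decay of [Z].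
   Counting the juveniles gives a conservation law: [N + P + Z - N_T] is minus the discounted
   mass of juveniles born during the last delay window, hence is controlled by the recent size
   of [Z]. With [Z] and [N + P - N_T] small, [f] increasing and [mu f(N_T1) = lambda] make the
   [P]-equation push [P] back towards [P1] at the edges of a band around it; so [P] never
   leaves the band (which bootstraps the first two estimates), and as [Z -> 0] the band can be
   shrunk, giving convergence to [E1]. *)

From Stdlib Require Import Reals Lra Psatz Classical ClassicalEpsilon.
From Coquelicot Require Import Coquelicot.
Open Scope R_scope.

(** * Continuity and derivatives of real functions *)

Lemma continuous_eps_delta (g : R -> R) x : continuous g x ->
  forall eps, 0 < eps -> exists d, 0 < d /\ forall y, Rabs (y - x) < d -> Rabs (g y - g x) < eps.
Proof.
  intros H eps Heps. apply continuity_pt_filterlim in H.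
  destruct (H eps Heps) as [d [Hd Hy]].
  exists d. split; auto. intros y Hyx.
  destruct (Req_dec y x) as [->|Hne].
  - rewrite Rminus_eq_0, Rabs_R0; auto.
  - apply (Hy y). split; [split; [exact I| auto]| exact Hyx].
Qed.

Lemma eps_delta_continuous (g : R -> R) x :
  (forall eps, 0 < eps -> exists d, 0 < d /\ forall y, Rabs (y - x) < d -> Rabs (g y - g x) < eps) ->
  continuous g x.
Proof.
  intros H. apply continuity_pt_filterlim.
  intros eps Heps. destruct (H eps Heps) as [d [Hd Hy]].
  exists d. split; auto. intros y [_ Hy']. apply Hy. exact Hy'.
Qed.

Lemma filterlim_within_eps_delta (D : R -> Prop) (phi : R -> R) x L :
  filterlim phi (within D (locally x)) (locally L) ->
  forall eps, 0 < eps -> exists d, 0 < d /\ forall y, D y -> Rabs (y - x) < d -> Rabs (phi y - L) < eps.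
Proof.
  intros H eps Heps.
  destruct (H (ball L (mkposreal eps Heps)) (locally_ball _ _)) as [d Hd].
  exists d. split; [apply cond_pos|]. intros y Dy Hyx. apply (Hd y); auto.
Qed.

Lemma continuous_from_interior a (phi : R -> R) x :
  continuous_from a phi -> a < x -> continuous phi x.
Proof.
  intros H Hx. apply eps_delta_continuous. intros eps Heps.
  destruct (filterlim_within_eps_delta _ phi x _ (H x ltac:(lra)) eps Heps) as [d [Hd Hy]].
  exists (Rmin d (x - a)). split; [apply Rmin_pos; lra|].
  intros y Hyx. assert (Hm1 := Rmin_l d (x - a)). assert (Hm2 := Rmin_r d (x - a)).
  apply Hy; [apply Rabs_def2 in Hyx|]; lra.
Qed.

Lemma is_derive_continuous (f : R -> R) x l : is_derive f x l -> continuous f x.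
Proof.
  intros H. apply continuity_pt_filterlim, derivable_continuous_pt.
  exists l. now apply is_derive_Reals.
Qed.

Lemma continuous_Rplus (f g : R -> R) x :
  continuous f x -> continuous g x -> continuous (fun y => f y + g y) x.
Proof. exact (continuous_plus f g x). Qed.

Lemma continuous_Rminus (f g : R -> R) x :
  continuous f x -> continuous g x -> continuous (fun y => f y - g y) x.
Proof. exact (continuous_minus f g x). Qed.

Lemma continuous_Rmult (f g : R -> R) x :
  continuous f x -> continuous g x -> continuous (fun y => f y * g y) x.
Proof. exact (continuous_mult f g x). Qed.

Lemma continuous_Rdiv (f g : R -> R) x :
  continuous f x -> continuous g x -> g x <> 0 -> continuous (fun y => f y / g y) x.
Proof.
  intros Hf Hg Hx. apply continuity_pt_filterlim.
  apply continuity_pt_div; auto; now apply continuity_pt_filterlim.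
Qed.

Lemma continuous_Ropp (x : R) : continuous (fun y => - y) x.
Proof. apply (is_derive_continuous _ _ (-1)). auto_derive; auto. Qed.

Lemma continuous_affine (a b x : R) : continuous (fun y => a * y + b) x.
Proof. apply (is_derive_continuous _ _ a). auto_derive; auto. ring. Qed.

Lemma is_derive_Rconst (c x : R) : is_derive (fun _ => c) x 0.
Proof. apply is_derive_Reals, derivable_pt_lim_const. Qed.

Lemma is_derive_Rid (x : R) : is_derive (fun y => y) x 1.
Proof. apply is_derive_Reals, derivable_pt_lim_id. Qed.

Lemma is_derive_Rplus (f g : R -> R) x df dg : is_derive f x df -> is_derive g x dg ->
  is_derive (fun y => f y + g y) x (df + dg).
Proof. exact (is_derive_plus f g x df dg). Qed.

Lemma is_derive_Rminus (f g : R -> R) x df dg : is_derive f x df -> is_derive g x dg ->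
  is_derive (fun y => f y - g y) x (df - dg).
Proof. exact (is_derive_minus f g x df dg). Qed.

Lemma is_derive_Rmult (f g : R -> R) x df dg : is_derive f x df -> is_derive g x dg ->
  is_derive (fun y => f y * g y) x (df * g x + f x * dg).
Proof. intros Hf Hg. apply (is_derive_mult f g x df dg Hf Hg Rmult_comm). Qed.

Lemma is_derive_Rcomp (f g : R -> R) x df dg : is_derive f (g x) df -> is_derive g x dg ->
  is_derive (fun y => f (g y)) x (df * dg).
Proof. intros Hf Hg. rewrite Rmult_comm. exact (is_derive_comp f g x df dg Hf Hg). Qed.

Lemma is_derive_exp_lin (k x : R) : is_derive (fun y => exp (k * y)) x (k * exp (k * x)).
Proof. auto_derive; auto. ring. Qed.

Lemma is_derive_eq (f : R -> R) x l l' : is_derive f x l -> l = l' -> is_derive f x l'.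
Proof. now intros H <-. Qed.

Lemma exp_le_compat x y : x <= y -> exp x <= exp y.
Proof. intros [H|H]; [left; now apply exp_increasing| subst; lra]. Qed.

Lemma is_lim_p_infty_eps (F : R -> R) l :
  (forall e, 0 < e -> exists M, forall x, M < x -> Rabs (F x - l) < e) -> is_lim F p_infty l.
Proof. intros H. apply is_lim_spec. intros e. destruct (H e (cond_pos e)) as [M HM]. now exists M. Qed.

(* Coquelicot's [RInt] and [is_derive] live in normed modules whose carrier only reduces
   to [R]; abstracting the integrals and retyping the equation lets [ring]/[field]/[lra] work. *)
Ltac realify :=
  repeat match goal with |- context [@RInt ?V ?f ?a ?b] =>
    let I := fresh "I" in generalize (@RInt V f a b : R); intro I end;
  try match goal with |- ?a = ?b => change (@eq R a b) end.

Definition clamp (a b x : R) := Rmax a (Rmin b x).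

Lemma clamp_in a b x : a <= b -> a <= clamp a b x <= b.
Proof. intros. unfold clamp. split; [apply Rmax_l|]. apply Rmax_lub; auto. apply Rmin_l. Qed.

Lemma clamp_id a b x : a <= x <= b -> clamp a b x = x.
Proof. intros. unfold clamp. rewrite Rmin_right, Rmax_right; lra. Qed.

Lemma clamp_lipschitz a b x y : Rabs (clamp a b y - clamp a b x) <= Rabs (y - x).
Proof.
  unfold clamp, Rmax, Rmin.
  repeat (destruct Rle_dec); unfold Rabs; repeat destruct Rcase_abs; lra.
Qed.

Lemma continuous_clamp (D : R -> Prop) a b (phi : R -> R) : a <= b ->
  (forall x, a <= x <= b -> filterlim phi (within D (locally x)) (locally (phi x))) ->
  (forall x, a <= x <= b -> D x) ->
  forall x, continuous (fun z => phi (clamp a b z)) x.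
Proof.
  intros Hab H HD x. apply eps_delta_continuous. intros eps Heps.
  assert (Hx := clamp_in a b x Hab).
  destruct (filterlim_within_eps_delta D phi _ _ (H _ Hx) eps Heps) as [d [Hd Hy]].
  exists d. split; auto. intros y Hyx. apply Hy.
  - apply HD, clamp_in; auto.
  - eapply Rle_lt_trans; [apply clamp_lipschitz| auto].
Qed.

Lemma continuous_on_interval_clamp a b phi : a <= b -> continuous_on_interval a b phi ->
  forall x, continuous (fun z => phi (clamp a b z)) x.
Proof. intros Hab H. apply (continuous_clamp (fun y => a <= y <= b)); auto. Qed.

Lemma continuous_from_clamp a b phi : a <= b -> continuous_from a phi ->
  forall x, continuous (fun z => phi (clamp a b z)) x.
Proof. intros Hab H. apply (continuous_clamp (fun y => a <= y)); [exact Hab| intros; apply H; lra| intros; lra]. Qed.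

Lemma sqrt_sum_sq_lt a b c e : Rabs a + Rabs b + Rabs c < e -> sqrt (a ^ 2 + b ^ 2 + c ^ 2) < e.
Proof.
  intros H.
  assert (Ha := Rabs_pos a). assert (Hb := Rabs_pos b). assert (Hc := Rabs_pos c).
  rewrite <- (sqrt_pow2 e) by lra. apply sqrt_lt_1; [nra| nra|].
  rewrite <- (pow2_abs a), <- (pow2_abs b), <- (pow2_abs c). nra.
Qed.

(** * C^1 functions and comparison arguments *)

Section C1Functions.
Variables (f df : R -> R).
Hypothesis Hf : C1_nonneg f df.

Lemma C1_nonneg_is_derive x : 0 < x -> is_derive f x (df x).
Proof. now apply Hf. Qed.

Lemma C1_nonneg_continuous x : 0 < x -> continuous f x.
Proof. intros Hx. apply (is_derive_continuous _ _ (df x)), C1_nonneg_is_derive, Hx. Qed.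

Lemma C1_nonneg_MVT x y : 0 < x -> x < y -> exists c, x <= c <= y /\ f y - f x = df c * (y - x).
Proof.
  intros Hx Hxy.
  destruct (MVT_gen f x y df) as [c [Hc Hfc]]; rewrite Rmin_left, Rmax_right in * by lra.
  - intros z Hz. apply C1_nonneg_is_derive; lra.
  - intros z Hz. apply continuity_pt_filterlim, C1_nonneg_continuous; lra.
  - now exists c.
Qed.

Lemma C1_nonneg_increasing : (forall x, 0 <= x -> df x > 0) ->
  forall x y, 0 < x -> x < y -> f x < f y.
Proof.
  intros Hd x y Hx Hxy. destruct (C1_nonneg_MVT x y Hx Hxy) as [c [Hc E]].
  assert (df c > 0) by (apply Hd; lra). nra.
Qed.

Lemma C1_nonneg_nondecreasing : (forall x, 0 <= x -> 0 <= df x) ->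
  forall x y, 0 < x -> x <= y -> f x <= f y.
Proof.
  intros Hd x y Hx [Hxy|<-]; [|lra].
  destruct (C1_nonneg_MVT x y Hx Hxy) as [c [Hc E]].
  assert (0 <= df c) by (apply Hd; lra). nra.
Qed.

Lemma C1_nonneg_right_quotient e : 0 < e ->
  exists d, 0 < d /\ forall y, 0 < y < d -> (df 0 - e) * y < f y - f 0.
Proof.
  intros He. destruct Hf as [_ [Hq _]].
  destruct (filterlim_within_eps_delta _ _ 0 _ Hq e He) as [d [Hd Hy]].
  exists d. split; auto. intros y Hy0.
  assert (A := Hy y ltac:(lra) ltac:(rewrite Rminus_0_r, Rabs_pos_eq; lra)).
  apply Rabs_def2 in A.
  replace (f y - f 0) with ((f y - f 0) / y * y) by (field; lra). nra.
Qed.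

(* If [f 0 = 0] the right derivative at [0] must be positive; if [f 0 > 0],
   [f] stays positive near [0] by right continuity. *)
Lemma C1_nonneg_pos : (forall x, 0 <= x -> 0 <= f x) -> (forall x, 0 <= x -> 0 <= df x) ->
  (f 0 = 0 -> df 0 > 0) -> forall x, 0 < x -> 0 < f x.
Proof.
  intros Hnn Hd Hd0 x Hx.
  assert (Hy : exists y, 0 < y <= x /\ 0 < f y).
  { assert (HL := Hd 0 (Rle_refl 0)). assert (H0 := Hnn 0 (Rle_refl 0)).
    destruct (Req_dec (f 0) 0) as [E|E].
    - destruct (C1_nonneg_right_quotient (df 0 / 2)) as [d [Hdp Hq]]; [specialize (Hd0 E); lra|].
      assert (Hm := Rmin_l d x). assert (Hm' := Rmin_r d x). assert (Hp := Rmin_pos d x Hdp Hx).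
      exists (Rmin d x / 2). split; [lra|]. specialize (Hq (Rmin d x / 2) ltac:(lra)).
      specialize (Hd0 E). nra.
    - destruct (C1_nonneg_right_quotient 1) as [d [Hdp Hq]]; [lra|].
      set (y := Rmin (Rmin d x) (f 0 / (df 0 + 1)) / 2).
      assert (Hm1 := Rmin_l (Rmin d x) (f 0 / (df 0 + 1))).
      assert (Hm2 := Rmin_r (Rmin d x) (f 0 / (df 0 + 1))).
      assert (Hm3 := Rmin_l d x). assert (Hm4 := Rmin_r d x).
      assert (Hq0 : 0 < f 0 / (df 0 + 1)) by (apply Rdiv_lt_0_compat; lra).
      assert (Hm0 : 0 < Rmin (Rmin d x) (f 0 / (df 0 + 1))) by (repeat apply Rmin_pos; lra).
      exists y. split; [unfold y; lra|].
      assert (Hy1 : y * (df 0 + 1) < f 0).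
      { assert (Eq : f 0 / (df 0 + 1) * (df 0 + 1) = f 0) by (field; lra).
        assert (y < f 0 / (df 0 + 1)) by (unfold y; lra). nra. }
      specialize (Hq y ltac:(unfold y; lra)).
      assert (0 <= df 0 * y) by (apply Rmult_le_pos; unfold y; lra). nra. }
  destruct Hy as [y [Hyx Hfy]].
  eapply Rlt_le_trans; [exact Hfy|]. apply C1_nonneg_nondecreasing; auto; lra.
Qed.

End C1Functions.

Lemma continuity_pt_Rabs (q : R -> R) x : continuity_pt q x -> continuity_pt (fun y => Rabs (q y)) x.
Proof. intros H. apply (continuity_pt_comp q Rabs); auto. apply Rcontinuity_abs. Qed.

Lemma first_zero_crossing (q : R -> R) a b : a <= b ->
  (forall x, a <= x <= b -> continuity_pt q x) -> q a < 0 -> 0 <= q b ->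
  exists t1, a < t1 <= b /\ q t1 = 0 /\ forall r, a <= r < t1 -> q r < 0.
Proof.
  intros Hab Hc Ha Hb.
  set (E := fun x => a <= x <= b /\ forall r, a <= r <= x -> q r < 0).
  assert (HEa : E a) by (split; [lra| intros r Hr; replace r with a by lra; auto]).
  assert (Hbd : bound E) by (exists b; intros x [Hx _]; lra).
  destruct (completeness E Hbd (ex_intro _ a HEa)) as [t1 [Hub Hlub]].
  assert (Ht1a : a <= t1) by (apply Hub; exact HEa).
  assert (Ht1b : t1 <= b) by (apply Hlub; intros x [Hx _]; lra).
  assert (Hbelow : forall r, a <= r < t1 -> q r < 0).
  { intros r Hr.
    destruct (classic (exists x, E x /\ r <= x)) as [[x [[Hx1 Hx2] Hrx]]|Hn].
    - apply Hx2; lra.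
    - exfalso. assert (t1 <= r); [|lra]. apply Hlub. intros x Ex.
      destruct (Rle_dec x r); auto. exfalso; apply Hn; exists x; split; auto; lra. }
  assert (Hqc := continuous_eps_delta q t1 (proj1 (continuity_pt_filterlim _ _) (Hc t1 ltac:(lra)))).
  assert (Hge : 0 <= q t1).
  { destruct (Rle_dec 0 (q t1)) as [|Hn]; auto. exfalso.
    assert (Hlt : t1 < b) by (destruct (Req_dec t1 b); [subst; lra| lra]).
    destruct (Hqc (- q t1) ltac:(lra)) as [d [Hd Hy]].
    set (x := Rmin (t1 + d / 2) b).
    assert (Hx1 : x <= t1 + d / 2) by apply Rmin_l.
    assert (Hx2 : x <= b) by apply Rmin_r.
    assert (Hx3 : t1 < x) by (unfold x; apply Rmin_glb_lt; lra).
    assert (E x).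
    { split; [lra|]. intros r Hr. destruct (Rlt_dec r t1); [apply Hbelow; lra|].
      assert (A := Hy r ltac:(rewrite Rabs_pos_eq; lra)). apply Rabs_def2 in A. lra. }
    assert (x <= t1) by (apply Hub; auto). lra. }
  assert (Hle : q t1 <= 0).
  { destruct (Rle_dec (q t1) 0) as [|Hn]; auto. exfalso.
    destruct (Hqc (q t1) ltac:(lra)) as [d [Hd Hy]].
    destruct (Req_dec a t1) as [Ea|Ea]; [subst; lra|].
    set (r := Rmax a (t1 - d / 2)).
    assert (Hr1 : a <= r) by apply Rmax_l.
    assert (Hr2 : t1 - d / 2 <= r) by apply Rmax_r.
    assert (Hr3 : r < t1) by (unfold r; apply Rmax_lub_lt; lra).
    assert (A := Hy r ltac:(rewrite Rabs_left; lra)). apply Rabs_def2 in A.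
    assert (q r < 0) by (apply Hbelow; lra). lra. }
  exists t1. split; [|split; [lra| exact Hbelow]].
  split; auto. destruct (Req_dec a t1) as [Ea|]; [subst; lra| lra].
Qed.

Lemma is_derive_le_at_contact (y w : R -> R) t1 y' w' d : 0 < d ->
  is_derive y t1 y' -> is_derive w t1 w' -> y t1 = w t1 ->
  (forall r, t1 - d < r < t1 -> y r < w r) -> w' <= y'.
Proof.
  intros Hd Hy Hw E Hb.
  destruct (Rle_dec w' y') as [|Hn]; auto. exfalso.
  assert (HD := is_derive_Rminus y w t1 _ _ Hy Hw). apply is_derive_Reals in HD.
  destruct (HD ((w' - y') / 2) ltac:(lra)) as [del Hdel].
  assert (Hm0 : 0 < Rmin del d) by (apply Rmin_pos; [apply cond_pos| lra]).
  assert (Hm1 : Rmin del d <= del) by apply Rmin_l.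
  assert (Hm2 : Rmin del d <= d) by apply Rmin_r.
  set (k := - Rmin del d / 2).
  assert (A := Hdel k ltac:(unfold k; lra) ltac:(unfold k; rewrite Rabs_left; lra)).
  rewrite E, Rminus_eq_0 in A. apply Rabs_def2 in A.
  assert (B : y (t1 + k) < w (t1 + k)) by (apply Hb; unfold k; lra).
  assert (C : (y (t1 + k) - w (t1 + k) - 0) / k > 0).
  { assert (k < 0) by (unfold k; lra). assert (/ k < 0) by (apply Rinv_lt_0_compat; lra).
    unfold Rdiv. nra. }
  lra.
Qed.

Lemma is_derive_at_abs_contact (Z W : R -> R) t1 z' w' d : 0 < d ->
  is_derive Z t1 z' -> is_derive W t1 w' -> Rabs (Z t1) = W t1 ->
  (forall r, t1 - d < r < t1 -> Rabs (Z r) < W r) -> w' * W t1 <= z' * Z t1.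
Proof.
  intros Hd HZ HW E Hb.
  destruct (Rle_dec 0 (Z t1)) as [Hp|Hp].
  - rewrite Rabs_pos_eq in E by auto.
    assert (w' <= z').
    { apply (is_derive_le_at_contact Z W t1 z' w' d); auto.
      intros r Hr. specialize (Hb r Hr). assert (Z r <= Rabs (Z r)) by apply Rle_abs. lra. }
    rewrite <- E. nra.
  - rewrite Rabs_left in E by lra.
    assert (w' <= - z').
    { apply (is_derive_le_at_contact (fun x => - Z x) W t1 (- z') w' d); auto.
      - apply (is_derive_opp Z). auto.
      - intros r Hr. specialize (Hb r Hr).
        assert (- Z r <= Rabs (Z r)) by (rewrite <- Rabs_Ropp; apply Rle_abs). lra. }
    rewrite <- E. nra.
Qed.

Lemma exp_barrier_shift A kap a tmax v t : 0 <= A -> 0 <= kap -> t - tmax <= v ->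
  A * exp (- kap * (v - a)) <= exp (kap * tmax) * (A * exp (- kap * (t - a))).
Proof.
  intros HA Hk Hv.
  replace (exp (- kap * (v - a))) with (exp (kap * (t - v)) * exp (- kap * (t - a)))
    by (rewrite <- exp_plus; f_equal; ring).
  assert (exp (kap * (t - v)) <= exp (kap * tmax)) by (apply exp_le_compat; nra).
  assert (0 < exp (- kap * (t - a))) by apply exp_pos.
  replace (exp (kap * tmax) * (A * exp (- kap * (t - a))))
    with (A * (exp (kap * tmax) * exp (- kap * (t - a)))) by ring.
  apply Rmult_le_compat_l; [lra|]. apply Rmult_le_compat_r; lra.
Qed.

Lemma razumikhin_contact z zd w del kap e : 0 < w -> Rabs z = w -> e < del - kap ->
  - kap * w * w <= zd * z -> Rabs (zd + del * z) <= e * w -> False.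
Proof.
  intros Hw Habs Hkey Hcontact Hineq.
  assert (Hsq : z * z = w * w) by (rewrite <- Habs; unfold Rabs; destruct Rcase_abs; ring).
  assert (Hprod : (zd + del * z) * z <= e * w * w).
  { eapply Rle_trans; [apply Rle_abs|]. rewrite Rabs_mult, Habs. apply Rmult_le_compat_r; lra. }
  set (X := w * w) in *. assert (HX : 0 < X) by (unfold X; nra).
  replace ((zd + del * z) * z) with (zd * z + del * (z * z)) in Hprod by ring.
  rewrite Hsq in Hprod. fold X in Hprod.
  replace (e * w * w) with (e * X) in Hprod by (unfold X; ring).
  replace (- kap * w * w) with (- kap * X) in Hcontact by (unfold X; ring).
  assert (0 < (del - kap - e) * X) by (apply Rmult_lt_0_compat; lra).
  nra.
Qed.

(* Razumikhin-type comparison: at the first time [|Z|] touches the barrier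
   [W t = A exp(-kap (t - a))], the delayed term is at most [c exp(kap tmax) W],
   so [Z] would have to decay faster than [W], which is impossible. *)
Lemma halanay_estimate (Z Zd v : R -> R) a b A c del kap tmax :
  0 < a -> a <= b -> 0 < A -> 0 < kap -> 0 <= c -> 0 <= tmax ->
  c * exp (kap * tmax) < del - kap ->
  (forall x, a <= x <= b -> continuity_pt Z x) ->
  (forall s, 0 <= s <= a -> Rabs (Z s) < A) ->
  (forall t, a < t <= b -> is_derive Z t (Zd t) /\ t - tmax <= v t <= t /\ 0 <= v t /\
       Rabs (Zd t + del * Z t) <= c * Rabs (Z (v t))) ->
  forall t, a <= t <= b -> Rabs (Z t) < A * exp (- kap * (t - a)).
Proof.
  intros Ha Hab HA Hk Hc Htm Hkey Hcont Hhist Hdyn.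
  set (W := fun t => A * exp (- kap * (t - a))).
  assert (HWpos : forall t, 0 < W t) by (intros; unfold W; apply Rmult_lt_0_compat; auto; apply exp_pos).
  assert (HWder : forall t, is_derive W t (- kap * W t)) by (intros t; unfold W; auto_derive; auto; unfold Rminus; ring).
  assert (HWge : forall s, s <= a -> A <= W s).
  { intros s Hs. unfold W. rewrite <- (Rmult_1_r A) at 1. apply Rmult_le_compat_l; [lra|].
    rewrite <- exp_0. apply exp_le_compat. nra. }
  assert (Hbefore_a : forall r, 0 <= r <= a -> Rabs (Z r) < W r).
  { intros r Hr. specialize (Hhist r Hr). specialize (HWge r ltac:(lra)). lra. }
  intros t Ht. fold (W t).
  destruct (Rlt_dec (Rabs (Z t)) (W t)) as [|Hn]; auto. exfalso.
  set (q := fun x => Rabs (Z x) - W x).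
  assert (Hqc : forall x, a <= x <= t -> continuity_pt q x).
  { intros x Hx. apply continuity_pt_minus; [apply continuity_pt_Rabs, Hcont; lra|].
    apply continuity_pt_filterlim, (is_derive_continuous _ _ _ (HWder x)). }
  assert (Hqa : q a < 0) by (unfold q; specialize (Hbefore_a a ltac:(lra)); lra).
  destruct (first_zero_crossing q a t ltac:(lra) Hqc Hqa ltac:(unfold q; lra)) as [t1 [Ht1 [Hq1 Hbel]]].
  unfold q in Hq1, Hbel.
  assert (Hbel' : forall r, 0 <= r < t1 -> Rabs (Z r) < W r).
  { intros r Hr. destruct (Rle_dec r a); [apply Hbefore_a; lra|].
    specialize (Hbel r ltac:(lra)). lra. }
  destruct (Hdyn t1 ltac:(lra)) as [HZd [Hv1 [Hv2 Hineq]]].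
  assert (Hzv : Rabs (Z (v t1)) <= W (v t1)).
  { destruct (Req_dec (v t1) t1) as [->|E]; [lra| left; apply Hbel'; lra]. }
  assert (Hwv := exp_barrier_shift A kap a tmax (v t1) t1 ltac:(lra) ltac:(lra) ltac:(lra)).
  fold (W (v t1)) (W t1) in Hwv.
  assert (Hcw : c * Rabs (Z (v t1)) <= c * exp (kap * tmax) * W t1).
  { assert (c * Rabs (Z (v t1)) <= c * W (v t1)) by (apply Rmult_le_compat_l; auto). nra. }
  assert (HW1 := HWpos t1). assert (Habs : Rabs (Z t1) = W t1) by lra.
  assert (Hcontact := is_derive_at_abs_contact Z W t1 (Zd t1) (- kap * W t1) (t1 - a)
                        ltac:(lra) HZd (HWder t1) Habs ltac:(intros r Hr; specialize (Hbel r ltac:(lra)); lra)).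
  apply (razumikhin_contact (Z t1) (Zd t1) (W t1) del kap (c * exp (kap * tmax))); auto; lra.
Qed.

Lemma stays_in_band (P Pd : R -> R) a b c s : 0 < s -> a <= b ->
  (forall x, a <= x <= b -> continuity_pt P x) -> Rabs (P a - c) < s ->
  (forall t, a < t <= b -> is_derive P t (Pd t)) ->
  (forall t, a < t <= b -> (forall r, a <= r <= t -> Rabs (P r - c) <= s) ->
      (P t = c + s -> Pd t < 0) /\ (P t = c - s -> 0 < Pd t)) ->
  forall t, a <= t <= b -> Rabs (P t - c) < s.
Proof.
  intros Hs Hab Hcont Ha Hder Hsign t Ht.
  destruct (Rlt_dec (Rabs (P t - c)) s) as [|Hn]; auto. exfalso.
  set (q := fun x => Rabs (P x - c) - s).
  assert (Hqc : forall x, a <= x <= t -> continuity_pt q x).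
  { intros x Hx. unfold q. apply continuity_pt_minus; [|apply continuity_pt_const; intros ? ?; auto].
    apply continuity_pt_Rabs, continuity_pt_minus; [apply Hcont; lra| apply continuity_pt_const; intros ? ?; auto]. }
  destruct (first_zero_crossing q a t ltac:(lra) Hqc ltac:(unfold q; lra) ltac:(unfold q; lra))
    as [t1 [Ht1 [Hq1 Hbel]]].
  unfold q in Hq1, Hbel.
  assert (Hband : forall r, a <= r <= t1 -> Rabs (P r - c) <= s).
  { intros r Hr. destruct (Req_dec r t1); [subst; lra|]. specialize (Hbel r ltac:(lra)). lra. }
  destruct (Hsign t1 ltac:(lra) Hband) as [S1 S2].
  assert (HdPc : is_derive (fun x => P x - c) t1 (Pd t1)).
  { apply (is_derive_eq _ _ (Pd t1 - 0)); [|realify; ring].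
    apply is_derive_Rminus; [apply Hder; lra| apply is_derive_Rconst]. }
  assert (Hcontact := is_derive_at_abs_contact (fun x => P x - c) (fun _ => s) t1 (Pd t1) 0 (t1 - a)
    ltac:(lra) HdPc (is_derive_Rconst s t1) ltac:(simpl; lra) ltac:(intros r Hr; specialize (Hbel r ltac:(lra)); simpl; lra)).
  simpl in Hcontact. rewrite Rmult_0_l in Hcontact.
  destruct (Rle_dec 0 (P t1 - c)) as [Hp|Hp].
  - rewrite Rabs_pos_eq in Hq1 by auto. specialize (S1 ltac:(lra)). nra.
  - rewrite Rabs_left in Hq1 by lra. specialize (S2 ltac:(lra)). nra.
Qed.

Lemma same_side_of_no_crossing (P : R -> R) a b c : a <= b ->
  (forall x, a <= x <= b -> continuity_pt P x) -> (forall x, a <= x <= b -> P x <> c) ->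
  (c < P a -> c < P b) /\ (P a < c -> P b < c).
Proof.
  intros Hab Hcont Hnc.
  assert (Hcq : forall e x, a <= x <= b -> continuity_pt (fun y => e * (P y - c)) x).
  { intros e x Hx. apply continuity_pt_scal, continuity_pt_minus; [apply Hcont; lra|].
    apply continuity_pt_const. intros ? ?; auto. }
  split; intros HPa; apply Rnot_le_lt; intros HPb.
  - destruct (first_zero_crossing (fun y => -1 * (P y - c)) a b Hab) as [x [Hx [Hqx _]]];
      [apply Hcq| lra| lra| apply (Hnc x); lra].
  - destruct (first_zero_crossing (fun y => 1 * (P y - c)) a b Hab) as [x [Hx [Hqx _]]];
      [apply Hcq| lra| lra| apply (Hnc x); lra].
Qed.

(* Outside the [s]-band the drift has speed at least [k], so within time [2 sig / k]
   the trajectory would leave the [sig]-band. *)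
Lemma enters_band (P Pd : R -> R) a c s sig k : 0 < s -> 0 < k ->
  (forall x, a <= x -> continuity_pt P x) ->
  (forall t, a < t -> is_derive P t (Pd t)) ->
  (forall t, a <= t -> Rabs (P t - c) < sig) ->
  (forall t, a <= t -> (c + s <= P t -> Pd t <= - k) /\ (P t <= c - s -> k <= Pd t)) ->
  exists t2, a <= t2 /\ Rabs (P t2 - c) < s.
Proof.
  intros Hs Hk Hcont Hder Hband Hdrift.
  apply NNPP. intros Hn.
  assert (Hout : forall t, a <= t -> c + s <= P t \/ P t <= c - s).
  { intros t Ht. destruct (Rlt_dec (Rabs (P t - c)) s) as [Hlt|Hge]; [exfalso; apply Hn; eauto|].
    unfold Rabs in Hge. destruct Rcase_abs in Hge; lra. }
  assert (Hside : forall t, a <= t -> (c < P a -> c < P t) /\ (P a < c -> P t < c)).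
  { intros t Ht. apply same_side_of_no_crossing; [lra| intros x Hx; apply Hcont; lra|].
    intros x Hx E. destruct (Hout x ltac:(lra)); lra. }
  set (L := 2 * sig / k).
  assert (Hsig : 0 < sig) by (specialize (Hband a ltac:(lra)); assert (0 <= Rabs (P a - c)) by apply Rabs_pos; lra).
  assert (HL : 0 < L) by (unfold L; apply Rdiv_lt_0_compat; lra).
  assert (HkL : k * L = 2 * sig) by (unfold L; field; lra).
  destruct (MVT_gen P a (a + L) Pd) as [x [Hx E]]; rewrite Rmin_left, Rmax_right in * by lra.
  - intros x Hx. apply Hder; lra.
  - intros x Hx. apply Hcont; lra.
  - replace (a + L - a) with L in E by ring.
    assert (Ha := Hband a ltac:(lra)). assert (HaL := Hband (a + L) ltac:(lra)).
    apply Rabs_def2 in Ha. apply Rabs_def2 in HaL.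
    destruct (Hout a ltac:(lra)) as [Ha'|Ha'].
    + assert (Hx' : c + s <= P x).
      { destruct (Hout x ltac:(lra)) as [|Hlo]; auto. specialize (proj1 (Hside x ltac:(lra)) ltac:(lra)). lra. }
      specialize (proj1 (Hdrift x ltac:(lra)) Hx'). intros Hd.
      assert (Pd x * L <= - k * L) by (apply Rmult_le_compat_r; lra). lra.
    + assert (Hx' : P x <= c - s).
      { destruct (Hout x ltac:(lra)) as [Hhi|]; auto. specialize (proj2 (Hside x ltac:(lra)) ltac:(lra)). lra. }
      specialize (proj2 (Hdrift x ltac:(lra)) Hx'). intros Hd.
      assert (k * L <= Pd x * L) by (apply Rmult_le_compat_r; lra). lra.
Qed.

Lemma increasing_le_compat (F : R -> R) : (forall x y, 0 < x -> x < y -> F x < F y) ->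
  forall x y, 0 < x -> x <= y -> F x <= F y.
Proof. intros H x y Hx [Hy|<-]; [left; auto| lra]. Qed.

Lemma exists_decay_rate c del tmax : 0 <= c < del ->
  exists kap, 0 < kap /\ c * exp (kap * tmax) < del - kap.
Proof.
  intros Hc.
  assert (Hk : continuous (fun k => c * exp (k * tmax) + k) 0).
  { apply (is_derive_continuous _ _ (c * tmax * exp (0 * tmax) + 1)). auto_derive; auto. ring. }
  destruct (continuous_eps_delta _ 0 Hk (del - c) ltac:(lra)) as [d [Hd Hkd]].
  exists (d / 2). split; [lra|].
  specialize (Hkd (d / 2) ltac:(rewrite Rminus_0_r, Rabs_pos_eq; lra)). apply Rabs_def2 in Hkd.
  rewrite Rmult_0_l, exp_0, Rmult_1_r, Rplus_0_r in Hkd. lra.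
Qed.

Lemma exp_decay_eventually_le A kap a zeta : 0 < kap -> 0 < zeta ->
  exists T, a <= T /\ forall t, T <= t -> A * exp (- kap * (t - a)) <= zeta.
Proof.
  intros Hk Hz. set (L := Rabs A / (zeta * kap)).
  assert (HL : 0 <= L) by (unfold L; apply Rdiv_le_0_compat; [apply Rabs_pos| nra]).
  exists (a + L). split; [lra|]. intros t Ht.
  assert (Hx : Rabs A / zeta <= kap * (t - a)).
  { replace (Rabs A / zeta) with (kap * L) by (unfold L; field; lra). nra. }
  assert (Hexp := exp_ineq1_le (kap * (t - a))).
  set (E := exp (kap * (t - a))) in *.
  assert (HE : 0 < E) by apply exp_pos.
  replace (- kap * (t - a)) with (- (kap * (t - a))) by ring. rewrite exp_Ropp. fold E.
  assert (HA : Rabs A <= zeta * E).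
  { apply (Rmult_le_compat_l zeta) in Hx; [|lra].
    replace (zeta * (Rabs A / zeta)) with (Rabs A) in Hx by (field; lra). nra. }
  assert (A <= Rabs A) by apply Rle_abs.
  apply (Rmult_le_reg_r E); [lra|]. rewrite Rmult_assoc, Rinv_l by lra. lra.
Qed.

(** * Inverses of expanding functions and integrals *)

Section Expanding.
Variables (F dF : R -> R) (c : R).
Hypothesis Hc : 0 < c.
Hypothesis HF : forall x, is_derive F x (dF x).
Hypothesis HdF : forall x, c <= dF x.

Lemma expanding_continuous x : continuity_pt F x.
Proof. apply continuity_pt_filterlim, (is_derive_continuous _ _ _ (HF x)). Qed.

Lemma expanding_growth x y : x < y -> c * (y - x) <= F y - F x.
Proof.
  intros Hxy. destruct (MVT_gen F x y dF) as [z [Hz E]].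
  - intros; apply HF.
  - intros; apply expanding_continuous.
  - rewrite E. apply Rmult_le_compat_r; [lra| apply HdF].
Qed.

Lemma expanding_increasing x y : x < y -> F x < F y.
Proof. intros H. assert (A := expanding_growth x y H). nra. Qed.

Lemma expanding_inj x y : F x = F y -> x = y.
Proof.
  intros E. destruct (Rtotal_order x y) as [H|[H|H]]; auto;
    apply expanding_increasing in H; lra.
Qed.

Lemma expanding_le_reflect x y : F x <= F y -> x <= y.
Proof. intros H. destruct (Rle_dec x y); auto. assert (F y < F x) by (apply expanding_increasing; lra). lra. Qed.

Lemma expanding_surj y : exists x, F x = y.
Proof.
  set (r := Rabs (y - F 0) / c + 1).
  assert (Hr : 0 < r) by (unfold r; assert (0 <= Rabs (y - F 0) / c) by (apply Rdiv_le_0_compat; [apply Rabs_pos| lra]); lra).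
  assert (Hcr : c * r = Rabs (y - F 0) + c) by (unfold r; field; lra).
  assert (A1 := expanding_growth (- r) 0 ltac:(lra)). assert (A2 := expanding_growth 0 r Hr).
  assert (B := Rle_abs (y - F 0)). assert (B' : - (y - F 0) <= Rabs (y - F 0)) by (rewrite <- Rabs_Ropp; apply Rle_abs).
  destruct (IVT (fun x => F x - y) (- r) r) as [x [_ Hx]]; try lra.
  - intros x. apply continuity_pt_minus; [apply expanding_continuous| apply continuity_pt_const; intros ? ?; auto].
  - exists x; lra.
Qed.

End Expanding.

(* The inverse of a function, chosen by Hilbert's epsilon; it is a genuine inverse for
   the expanding functions above. *)
Definition inverse_fun (F : R -> R) (y : R) : R := epsilon (inhabits 0) (fun x => F x = y).

Section ExpandingInverse.
Variables (F dF : R -> R) (c : R).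
Hypothesis Hc : 0 < c.
Hypothesis HF : forall x, is_derive F x (dF x).
Hypothesis HdF : forall x, c <= dF x.

Lemma inverse_fun_right y : F (inverse_fun F y) = y.
Proof. apply (epsilon_spec (inhabits 0) (fun x => F x = y)), (expanding_surj F dF c); auto. Qed.

Lemma inverse_fun_left x : inverse_fun F (F x) = x.
Proof. apply (expanding_inj F dF c); auto. apply inverse_fun_right. Qed.

Lemma inverse_fun_continuous y : continuous (inverse_fun F) y.
Proof.
  apply eps_delta_continuous. intros eps Heps.
  set (x0 := inverse_fun F y).
  assert (Hy : F x0 = y) by apply inverse_fun_right.
  assert (H1 : F (x0 - eps) < y) by (rewrite <- Hy; apply (expanding_increasing F dF c); auto; lra).
  assert (H2 : y < F (x0 + eps)) by (rewrite <- Hy; apply (expanding_increasing F dF c); auto; lra).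
  assert (Hm1 := Rmin_l (y - F (x0 - eps)) (F (x0 + eps) - y)).
  assert (Hm2 := Rmin_r (y - F (x0 - eps)) (F (x0 + eps) - y)).
  exists (Rmin (y - F (x0 - eps)) (F (x0 + eps) - y)). split; [apply Rmin_pos; lra|].
  intros z Hz. apply Rabs_def2 in Hz.
  assert (Hz' := inverse_fun_right z).
  assert (A1 : inverse_fun F z <= x0 + eps) by (apply (expanding_le_reflect F dF c); auto; lra).
  assert (A2 : x0 - eps <= inverse_fun F z) by (apply (expanding_le_reflect F dF c); auto; lra).
  apply Rabs_def1; apply Rnot_le_lt; intros Hn.
  - assert (inverse_fun F z = x0 + eps) by lra. rewrite H in Hz'. lra.
  - assert (inverse_fun F z = x0 - eps) by lra. rewrite H in Hz'. lra.
Qed.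

Lemma inverse_fun_is_derive y : is_derive (inverse_fun F) y (/ dF (inverse_fun F y)).
Proof.
  apply is_derive_Reals. intros eps Heps.
  set (x0 := inverse_fun F y). set (d := dF x0).
  assert (Hd : c <= d) by apply HdF.
  assert (Hy : F x0 = y) by apply inverse_fun_right.
  set (e1 := Rmin (d / 2) (eps * d * d / 2)).
  assert (He1 : 0 < e1) by (unfold e1; apply Rmin_pos; [lra| assert (0 < eps * d * d) by (repeat apply Rmult_lt_0_compat; lra); lra]).
  assert (He1a : e1 <= d / 2) by apply Rmin_l.
  assert (He1b : e1 <= eps * d * d / 2) by apply Rmin_r.
  assert (HFd := HF x0). apply is_derive_Reals in HFd.
  destruct (HFd e1 He1) as [d1 Hd1].
  destruct (continuous_eps_delta _ y (inverse_fun_continuous y) d1 (cond_pos d1)) as [d2 [Hd2 Hc2]].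
  exists (mkposreal d2 Hd2). intros k Hk0 Hk. simpl in Hk.
  set (hh := inverse_fun F (y + k) - x0).
  assert (Hh : hh <> 0).
  { intros E. assert (F (inverse_fun F (y + k)) = F x0) by (unfold hh in E; f_equal; lra).
    rewrite inverse_fun_right in H. lra. }
  assert (Hhd : Rabs hh < d1) by (unfold hh, x0; apply Hc2; replace (y + k - y) with k by ring; auto).
  assert (A := Hd1 hh Hh Hhd).
  replace (x0 + hh) with (inverse_fun F (y + k)) in A by (unfold hh; ring).
  rewrite inverse_fun_right, Hy in A. replace (y + k - y) with k in A by ring.
  fold d in A. apply Rabs_def2 in A.
  set (q := k / hh) in *.
  assert (Hq : d / 2 <= q) by lra.
  replace (hh / k) with (/ q) by (unfold q; field; split; auto).
  replace (/ q - / d) with ((d - q) / (q * d)) by (field; lra).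
  rewrite Rabs_div by nra. rewrite (Rabs_pos_eq (q * d)) by nra.
  apply Rlt_div_l; [nra|].
  assert (Rabs (d - q) < e1) by (apply Rabs_def1; lra).
  assert (e1 <= eps * (q * d)) by (assert (d * d / 2 <= q * d) by nra; nra).
  lra.
Qed.

End ExpandingInverse.

Section RealIntegrals.
Variable f : R -> R.
Hypothesis Hf : forall x, continuous f x.

Lemma ex_RInt_continuous_R a b : ex_RInt f a b.
Proof. apply (ex_RInt_continuous (V := R_CompleteNormedModule)). intros; auto. Qed.

Lemma is_derive_RInt_R a x : is_derive (fun y => RInt f a y) x (f x).
Proof.
  apply (is_derive_RInt f (fun y => RInt f a y) a x); auto.
  apply filter_forall. intros y. apply (RInt_correct (V := R_CompleteNormedModule)), ex_RInt_continuous_R.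
Qed.

Lemma RInt_Chasles_R a b c : RInt f a b + RInt f b c = RInt f a c.
Proof. apply (RInt_Chasles (V := R_CompleteNormedModule)); apply ex_RInt_continuous_R. Qed.

Lemma RInt_swap_R a b : RInt f a b = - RInt f b a.
Proof. rewrite <- (opp_RInt_swap (V := R_CompleteNormedModule) f b a); [reflexivity| apply ex_RInt_continuous_R]. Qed.

Lemma RInt_translate t a b : RInt (fun u => f (t + u)) a b = RInt f (t + a) (t + b).
Proof.
  assert (E := RInt_comp_lin (V := R_CompleteNormedModule) f 1 t a b).
  replace (1 * a + t) with (t + a) in E by ring. replace (1 * b + t) with (t + b) in E by ring.
  rewrite <- E; [|apply ex_RInt_continuous_R].
  apply RInt_ext. intros x _. unfold scal; simpl; unfold mult; simpl.
  rewrite Rmult_1_l. f_equal. ring.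
Qed.

Lemma RInt_reflect t a b : RInt (fun u => f (t - u)) a b = - RInt f (t - a) (t - b).
Proof.
  assert (E := RInt_comp_lin (V := R_CompleteNormedModule) f (-1) t a b).
  replace (-1 * a + t) with (t - a) in E by ring. replace (-1 * b + t) with (t - b) in E by ring.
  rewrite <- E; [|apply ex_RInt_continuous_R].
  rewrite <- (RInt_opp (V := R_CompleteNormedModule)).
  - apply RInt_ext. intros x _. unfold scal; simpl; unfold mult, opp; simpl.
    replace (-1 * x + t) with (t - x) by ring. ring.
  - apply (ex_RInt_continuous (V := R_CompleteNormedModule)). intros z _.
    apply (continuous_Rmult (fun _ => -1)); [apply continuous_const|].
    apply (continuous_comp (fun u => -1 * u + t) f); [apply continuous_affine| auto].
Qed.

End RealIntegrals.

(** * The maturation delay and the conservation law *)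

Lemma delay_eq_expanding (Rr hist Phi dPhi : R -> R) c a s tau : 0 < c ->
  (forall x, is_derive Phi x (dPhi x)) -> (forall x, c <= dPhi x) ->
  (forall x, 0 <= x <= a -> RInt (fun u => Rr (hist u)) (- x) 0 = Phi x) ->
  0 <= tau <= a -> Phi tau = s -> delay Rr a hist s = tau.
Proof.
  intros Hc HPhi HdPhi Hint Htau Hs. unfold delay.
  assert (Hex : exists x, 0 <= x <= a /\ RInt (fun u => Rr (hist u)) (- x) 0 = s)
    by (exists tau; rewrite Hint; auto).
  destruct (epsilon_spec (inhabits 0) _ Hex) as [Hr Hs'].
  rewrite Hint in Hs' by auto.
  apply (expanding_inj Phi dPhi c); auto. congruence.
Qed.

Section InitialHistory.
Variables (Rr h : R -> R) (delta0 gamma g t0 m Rlo : R) (phi2 phi3 : R -> R).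
Hypothesis Ht0 : 0 < t0.
Hypothesis HRlo : 0 < Rlo.
Hypothesis HRc : forall x, 0 < x -> continuous Rr x.
Hypothesis Hhc : forall x, 0 < x -> continuous h x.
Hypothesis Hc2 : continuous_on_interval (- t0) 0 phi2.
Hypothesis Hc3 : continuous_on_interval (- t0) 0 phi3.
Hypothesis Hpos : forall u, - t0 <= u <= 0 -> 0 < phi2 u /\ Rlo <= Rr (phi2 u).
Hypothesis Hm : RInt (fun u => Rr (phi2 u)) (- t0) 0 = m.

Let c2 := fun u => phi2 (clamp (- t0) 0 u).
Let c3 := fun u => phi3 (clamp (- t0) 0 u).
Let dPhi := fun v => Rr (c2 (- v)).
Let Phi : R -> R := fun x => RInt dPhi 0 x.

Lemma history_clamp_bounds u : 0 < c2 u /\ Rlo <= Rr (c2 u).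
Proof. apply Hpos, clamp_in. lra. Qed.

Lemma history_rate_continuous x : continuous dPhi x.
Proof.
  apply (continuous_comp (fun v => c2 (- v)) Rr); [|apply HRc, history_clamp_bounds].
  apply (continuous_comp (fun v => - v) c2); [apply continuous_Ropp|].
  apply continuous_on_interval_clamp; auto; lra.
Qed.

Lemma history_integral x : 0 <= x <= t0 -> RInt (fun u => Rr (phi2 u)) (- x) 0 = Phi x.
Proof.
  intros Hx.
  assert (Hcont : forall z, continuous (fun u => Rr (c2 u)) z).
  { intros z. apply (continuous_comp c2 Rr); [|apply HRc, history_clamp_bounds].
    apply continuous_on_interval_clamp; auto; lra. }
  unfold Phi, dPhi.
  replace (RInt (fun v => Rr (c2 (- v))) 0 x) with (RInt (fun v => Rr (c2 (0 - v))) 0 x)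
    by (apply RInt_ext; intros; do 3 f_equal; ring).
  rewrite (RInt_reflect (fun u => Rr (c2 u))), (RInt_swap_R (fun u => Rr (c2 u))) by auto.
  rewrite Rminus_0_r, Rminus_0_l, Ropp_involutive.
  apply RInt_ext. intros y Hy. rewrite Rmin_left, Rmax_right in Hy by lra.
  unfold c2. rewrite clamp_id by lra. auto.
Qed.

Lemma history_Phi_is_derive x : is_derive Phi x (dPhi x).
Proof. apply is_derive_RInt_R, history_rate_continuous. Qed.

Lemma history_rate_lower x : Rlo <= dPhi x.
Proof. apply history_clamp_bounds. Qed.

Lemma history_Phi_0 : Phi 0 = 0.
Proof. apply (RInt_point (V := R_CompleteNormedModule)). Qed.

Lemma history_Phi_t0 : Phi t0 = m.
Proof. rewrite <- history_integral by lra. auto. Qed.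

Lemma history_delay s : 0 <= s <= m ->
  delay Rr t0 phi2 s = inverse_fun Phi s /\ 0 <= inverse_fun Phi s <= t0.
Proof.
  intros Hs.
  assert (HPhi := history_Phi_is_derive). assert (HdP := history_rate_lower).
  assert (HP0 := history_Phi_0). assert (HPt0 := history_Phi_t0).
  assert (Hinv := inverse_fun_right Phi dPhi Rlo HRlo HPhi HdP s).
  assert (Hr : 0 <= inverse_fun Phi s <= t0).
  { split; apply (expanding_le_reflect Phi dPhi Rlo); auto; rewrite Hinv; lra. }
  split; auto. apply (delay_eq_expanding Rr phi2 Phi dPhi Rlo); auto. apply history_integral.
Qed.

(* The substitution [s = Phi x], [x = delay s] turns the integral over the maturation
   variable into an integral over the age of the history. *)
Lemma initial_stage_integral :
  RInt (fun s => let tau := delay Rr t0 phi2 s in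
                 exp (- delta0 * tau) * gamma * g * phi3 (- tau) * h (phi2 (- tau)) / Rr (phi2 (- tau))) 0 m
  = RInt (fun x => exp (- delta0 * x) * gamma * g * phi3 (- x) * h (phi2 (- x))) 0 t0.
Proof.
  assert (HPhi := history_Phi_is_derive). assert (HdP := history_rate_lower).
  assert (HP0 := history_Phi_0). assert (HPt0 := history_Phi_t0).
  assert (Hmpos : 0 < m).
  { assert (A := expanding_growth Phi dPhi Rlo HPhi HdP 0 t0 Ht0). nra. }
  set (G := inverse_fun Phi).
  set (integrand := fun x => exp (- delta0 * x) * gamma * g * c3 (- x) * h (c2 (- x)) / Rr (c2 (- x))).
  assert (Hint : forall x, continuous integrand x).
  { intros x. unfold integrand.
    assert (Hc2' : continuous (fun v => c2 (- v)) x)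
      by (apply (continuous_comp (fun v => - v) c2); [apply continuous_Ropp| apply continuous_on_interval_clamp; auto; lra]).
    assert (Hc3' : continuous (fun v => c3 (- v)) x)
      by (apply (continuous_comp (fun v => - v) c3); [apply continuous_Ropp| apply continuous_on_interval_clamp; auto; lra]).
    assert (HB := history_clamp_bounds (- x)).
    apply continuous_Rdiv; [| apply history_rate_continuous| lra].
    repeat apply continuous_Rmult; try apply continuous_const.
    - apply continuous_exp_comp, (continuous_Rmult (fun _ => - delta0)); [apply continuous_const| apply continuous_id].
    - exact Hc3'.
    - apply (continuous_comp (fun v => c2 (- v)) h); auto. apply Hhc; lra. }
  transitivity (RInt (fun s => integrand (G s)) 0 m).
  { apply RInt_ext. intros s Hs. rewrite Rmin_left, Rmax_right in Hs by lra.
    destruct (history_delay s ltac:(lra)) as [E HGr]. fold G in E, HGr. cbv zeta. rewrite E. unfold integrand, c2, c3.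
    rewrite clamp_id by lra. reflexivity. }
  rewrite <- HP0 at 1. rewrite <- HPt0.
  rewrite <- (RInt_comp (V := R_CompleteNormedModule) (fun s => integrand (G s)) Phi dPhi 0 t0).
  - apply RInt_ext. intros y Hy. rewrite Rmin_left, Rmax_right in Hy by lra.
    unfold G. rewrite (inverse_fun_left Phi dPhi Rlo) by auto.
    unfold scal; simpl; unfold mult; simpl. unfold integrand, dPhi, c2, c3.
    rewrite clamp_id by lra.
    assert (A := Hpos (- y) ltac:(lra)). field. lra.
  - intros x _. apply (continuous_comp G integrand); auto. apply (inverse_fun_continuous Phi dPhi Rlo); auto.
  - intros x _. split; auto. apply history_rate_continuous.
Qed.

End InitialHistory.

Section ConservationLaw.
Variables (mu lambda g gamma delta delta0 m NT : R) (f h Rr : R -> R) (t0 : R)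
  (phi1 phi2 phi3 N P Z : R -> R) (T Plo Pup Rlo Rhi : R).
Hypothesis Ht0 : 0 < t0.
Hypothesis HT : t0 < T.
Hypothesis HPlo : 0 < Plo.
Hypothesis HRlo : 0 < Rlo.
Hypothesis Hm : 0 < m.
Hypothesis Hdelta0 : 0 <= delta0.
Hypothesis HRc : forall x, 0 < x -> continuous Rr x.
Hypothesis Hhc : forall x, 0 < x -> continuous h x.
Hypothesis HRb : forall x, Plo <= x <= Pup -> Rlo <= Rr x <= Rhi.
Hypothesis Hband : forall x, 0 <= x <= T -> Plo <= P x <= Pup.
Hypothesis HinD : in_D g gamma delta0 m NT h Rr t0 phi1 phi2 phi3.
Hypothesis Hsol : is_TDE_solution mu lambda g gamma delta delta0 m NT f h Rr t0 phi1 phi2 phi3 N P Z.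

(* [P] and [Z] frozen outside [[0, T]], so that integrals over all of [R] make sense. *)
Let Pe := fun x => P (clamp 0 T x).
Let Ze := fun x => Z (clamp 0 T x).
Let rate := fun v => Rr (Pe v).
(* [clock t] is the maturation level reached at time [t]; an individual maturing at
   time [t] entered the juvenile stage at time [U t]. *)
Let clock : R -> R := fun x => RInt rate 0 x.
Let U := fun t => inverse_fun clock (clock t - m).

Lemma frozen_band x : Plo <= Pe x <= Pup.
Proof. apply Hband, clamp_in. lra. Qed.

Lemma frozen_P_eq x : 0 <= x <= T -> Pe x = P x.
Proof. intros. unfold Pe. now rewrite clamp_id. Qed.

Lemma frozen_Z_eq x : 0 <= x <= T -> Ze x = Z x.
Proof. intros. unfold Ze. now rewrite clamp_id. Qed.

Lemma frozen_P_continuous x : continuous Pe x.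
Proof. apply continuous_from_clamp; [lra| apply Hsol]. Qed.

Lemma frozen_Z_continuous x : continuous Ze x.
Proof. apply continuous_from_clamp; [lra| apply Hsol]. Qed.

Lemma rate_continuous x : continuous rate x.
Proof. apply (continuous_comp Pe Rr); [apply frozen_P_continuous| apply HRc]. assert (A := frozen_band x). lra. Qed.

Lemma rate_bounds x : Rlo <= rate x <= Rhi.
Proof. apply HRb, frozen_band. Qed.

Lemma clock_is_derive x : is_derive clock x (rate x).
Proof. apply is_derive_RInt_R, rate_continuous. Qed.

Lemma rate_lower x : Rlo <= rate x.
Proof. apply rate_bounds. Qed.

Lemma clock_gap a b : a <= b -> Rlo * (b - a) <= clock b - clock a <= Rhi * (b - a).
Proof.
  intros [Hab|<-]; [|lra].
  destruct (MVT_gen clock a b rate) as [c [Hc E]].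
  - intros; apply clock_is_derive.
  - intros; apply continuity_pt_filterlim, (is_derive_continuous _ _ _ (clock_is_derive x)).
  - rewrite E. assert (A := rate_bounds c). split; nra.
Qed.

Lemma window_integral t tau : 0 <= tau <= t -> t <= T ->
  RInt (fun u => Rr (P (t + u))) (- tau) 0 = clock t - clock (t - tau).
Proof.
  intros Htau HtT.
  transitivity (RInt (fun u => rate (t + u)) (- tau) 0).
  { apply RInt_ext. intros x Hx. rewrite Rmin_left, Rmax_right in Hx by lra.
    unfold rate. rewrite frozen_P_eq by lra. auto. }
  rewrite RInt_translate by apply rate_continuous. unfold clock.
  rewrite <- (RInt_Chasles_R rate rate_continuous 0 (t - tau) t).
  replace (t + - tau) with (t - tau) by ring. rewrite Rplus_0_r. realify. ring.
Qed.

Lemma clock_t0 : clock t0 = m.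
Proof.
  destruct HinD as [_ [_ [_ [_ [_ [HmD _]]]]]]. rewrite <- HmD.
  transitivity (RInt (fun u => Rr (P (t0 + u))) (- t0) 0).
  { rewrite window_integral, Rminus_eq_0 by lra.
    replace (clock 0) with 0 by (symmetry; apply (RInt_point (V := R_CompleteNormedModule))).
    realify. ring. }
  apply RInt_ext. intros x Hx. rewrite Rmin_left, Rmax_right in Hx by lra.
  destruct (proj1 Hsol x ltac:(lra)) as [_ [E _]]. now rewrite E.
Qed.

Lemma clock_U t : clock (U t) = clock t - m.
Proof. apply (inverse_fun_right clock rate Rlo); auto using clock_is_derive, rate_lower. Qed.

Lemma U_bounds t : t0 <= t <= T -> 0 <= U t /\ m / Rhi <= t - U t <= m / Rlo.
Proof.
  intros Ht.
  assert (A := clock_gap t0 t ltac:(lra)). rewrite clock_t0 in A.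
  assert (HRhi : 0 < Rhi) by (assert (B := rate_bounds 0); lra).
  assert (Hle := expanding_le_reflect clock rate Rlo HRlo clock_is_derive rate_lower).
  split.
  - apply Hle. rewrite clock_U. replace (clock 0) with 0 by (symmetry; apply (RInt_point (V := R_CompleteNormedModule))). nra.
  - assert (HUt : U t <= t) by (apply Hle; rewrite clock_U; lra).
    assert (B := clock_gap (U t) t HUt). rewrite clock_U in B.
    split; [apply Rle_div_l| apply Rle_div_r]; lra.
Qed.

Lemma delay_window t : t0 <= t <= T -> delay Rr t (fun u => P (t + u)) m = t - U t.
Proof.
  intros Ht. destruct (U_bounds t Ht) as [HU0 HU1].
  assert (0 < m / Rhi) by (apply Rdiv_lt_0_compat; [lra| assert (B := rate_bounds 0); lra]).
  apply (delay_eq_expanding Rr (fun u => P (t + u)) (fun x => clock t - clock (t - x))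
           (fun x => rate (t - x)) Rlo).
  - exact HRlo.
  - intros x. apply (is_derive_eq _ _ (0 - rate (t - x) * (0 - 1))).
    + apply is_derive_Rminus; [apply is_derive_Rconst|].
      apply (is_derive_Rcomp clock (fun y => t - y)); [apply clock_is_derive|].
      apply is_derive_Rminus; [apply is_derive_Rconst| apply is_derive_Rid].
    + realify. ring.
  - intros x. apply rate_lower.
  - intros x Hx. apply window_integral; lra.
  - lra.
  - replace (t - (t - U t)) with (U t) by ring. rewrite clock_U. ring.
Qed.

Lemma delay_bounds t : t0 <= t <= T ->
  0 <= t - delay Rr t (fun u => P (t + u)) m /\
  m / Rhi <= delay Rr t (fun u => P (t + u)) m <= m / Rlo.
Proof. intros Ht. rewrite delay_window by auto. destruct (U_bounds t Ht). split; lra. Qed.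

Lemma U_is_derive t : is_derive U t (/ rate (U t) * rate t).
Proof.
  apply (is_derive_Rcomp (inverse_fun clock) (fun y => clock y - m)).
  - apply (inverse_fun_is_derive clock rate Rlo); auto using clock_is_derive, rate_lower.
  - apply (is_derive_eq _ _ (rate t - 0)); [|realify; ring].
    apply is_derive_Rminus; [apply clock_is_derive| apply is_derive_Rconst].
Qed.

(* Grazing produces juveniles at rate [gamma g Z h(P)]; the weight [exp (delta0 v)]
   compensates their mortality, and those born in [[U t, t]] are still juveniles at [t]. *)
Let birth := fun v => exp (delta0 * v) * (gamma * g * Ze v * h (Pe v)).
Let births : R -> R := fun x => RInt birth 0 x.
Let Q := fun t => exp (delta0 * t) * (N t + P t + Z t) + births t - births (U t) - NT * exp (delta0 * t).

Lemma birth_continuous x : continuous birth x.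
Proof.
  assert (A := frozen_band x).
  apply continuous_Rmult.
  - apply continuous_exp_comp, (continuous_Rmult (fun _ => delta0)); [apply continuous_const| apply continuous_id].
  - repeat apply continuous_Rmult; try apply continuous_const; [apply frozen_Z_continuous|].
    apply (continuous_comp Pe h); [apply frozen_P_continuous| apply Hhc; lra].
Qed.

Lemma Q_is_derive t : t0 < t < T -> is_derive Q t 0.
Proof.
  intros Ht. destruct (proj2 (proj2 (proj2 (proj2 Hsol))) t ltac:(lra)) as [dN [dP dZ]].
  cbv zeta in dN, dP, dZ. rewrite delay_window in dZ by lra.
  replace (t - (t - U t)) with (U t) in dZ by ring.
  destruct (U_bounds t ltac:(lra)) as [HU0 HU1].
  assert (HUT : U t <= T) by (assert (0 < m / Rhi) by (apply Rdiv_lt_0_compat; [lra| assert (B := rate_bounds 0); lra]); lra).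
  eapply is_derive_eq.
  - apply is_derive_Rminus; [apply is_derive_Rminus; [apply is_derive_Rplus|]|].
    + apply is_derive_Rmult; [apply is_derive_exp_lin|].
      apply is_derive_Rplus; [apply is_derive_Rplus|]; eassumption.
    + apply is_derive_RInt_R, birth_continuous.
    + apply (is_derive_Rcomp births U); [apply is_derive_RInt_R, birth_continuous| apply U_is_derive].
    + apply (is_derive_Rmult (fun _ => NT)); [apply is_derive_Rconst| apply is_derive_exp_lin].
  - unfold birth, rate. rewrite !frozen_Z_eq, !frozen_P_eq by lra.
    assert (Hr : 0 < Rr (P (U t))) by (assert (A := HRb (P (U t)) (Hband (U t) ltac:(lra))); lra).
    assert (Ee : exp (delta0 * t) * exp (- delta0 * (t - U t)) = exp (delta0 * U t))
      by (rewrite <- exp_plus; f_equal; ring).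
    rewrite <- Ee. realify. field. lra.
Qed.

Lemma Q_continuous x : 0 < x -> continuous Q x.
Proof.
  intros Hx. destruct Hsol as [_ [HNc [HPc [HZc _]]]].
  assert (Hb := is_derive_RInt_R birth birth_continuous 0).
  apply continuous_Rminus; [apply continuous_Rminus; [apply continuous_Rplus|]|].
  - apply continuous_Rmult; [apply (is_derive_continuous _ _ _ (is_derive_exp_lin delta0 x))|].
    repeat apply continuous_Rplus; eapply continuous_from_interior; eauto.
  - apply (is_derive_continuous _ _ _ (Hb x)).
  - apply (is_derive_continuous _ _ _ (is_derive_Rcomp births U x _ _ (Hb (U x)) (U_is_derive x))).
  - apply (continuous_Rmult (fun _ => NT)); [apply continuous_const|].
    apply (is_derive_continuous _ _ _ (is_derive_exp_lin delta0 x)).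
Qed.

Lemma births_t0 : births t0 = exp (delta0 * t0) *
  RInt (fun x => exp (- delta0 * x) * gamma * g * phi3 (- x) * h (phi2 (- x))) 0 t0.
Proof.
  set (j := fun u => exp (- delta0 * u) * gamma * g * Ze (t0 - u) * h (Pe (t0 - u))).
  assert (Hj : forall x, continuous j x).
  { intros x. assert (A := frozen_band (t0 - x)).
    assert (Hs : continuous (fun u => t0 - u) x) by (apply (continuous_Rminus (fun _ => t0)); [apply continuous_const| apply continuous_id]).
    repeat apply continuous_Rmult; try apply continuous_const.
    - apply continuous_exp_comp, (continuous_Rmult (fun _ => - delta0)); [apply continuous_const| apply continuous_id].
    - apply (continuous_comp (fun u => t0 - u) Ze); [exact Hs| apply frozen_Z_continuous].
    - apply (continuous_comp (fun u => t0 - u) (fun v => h (Pe v))); [exact Hs|].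
      apply (continuous_comp Pe h); [apply frozen_P_continuous| apply Hhc; lra]. }
  transitivity (RInt (fun u => birth (t0 - u)) 0 t0).
  { rewrite RInt_reflect by apply birth_continuous.
    rewrite (RInt_swap_R birth birth_continuous (t0 - 0)).
    rewrite Rminus_eq_0, Rminus_0_r. unfold births. realify. ring. }
  transitivity (RInt (fun u => scal (exp (delta0 * t0)) (j u)) 0 t0).
  { apply RInt_ext. intros x Hx. unfold birth, j, scal; simpl; unfold mult; simpl.
    replace (exp (delta0 * (t0 - x))) with (exp (delta0 * t0) * exp (- delta0 * x))
      by (rewrite <- exp_plus; f_equal; ring).
    realify. ring. }
  rewrite (RInt_scal (V := R_CompleteNormedModule)) by (apply ex_RInt_continuous_R; auto).
  unfold scal; simpl; unfold mult; simpl. f_equal.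
  apply RInt_ext. intros x Hx. rewrite Rmin_left, Rmax_right in Hx by lra.
  unfold j. rewrite frozen_Z_eq, frozen_P_eq by lra.
  destruct (proj1 Hsol (- x) ltac:(lra)) as [_ [E2 E3]].
  replace (t0 + - x) with (t0 - x) in E2, E3 by ring. now rewrite E2, E3.
Qed.

Lemma Q_t0 : Q t0 = 0.
Proof.
  assert (HUt0 : U t0 = 0).
  { unfold U. rewrite clock_t0, Rminus_eq_0.
    replace 0 with (clock 0) at 1 by apply (RInt_point (V := R_CompleteNormedModule)).
    apply (inverse_fun_left clock rate Rlo); auto using clock_is_derive, rate_lower. }
  assert (Hb0 : births 0 = 0) by apply (RInt_point (V := R_CompleteNormedModule)).
  destruct HinD as [_ [_ [Hc2 [Hc3 [_ [HmD HNTD]]]]]].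
  unfold Q. rewrite HUt0, Hb0, births_t0.
  destruct (proj1 Hsol 0 ltac:(lra)) as [E1 [E2 E3]]. rewrite Rplus_0_r in E1, E2, E3.
  rewrite E1, E2, E3, HNTD, (initial_stage_integral Rr h delta0 gamma g t0 m Rlo phi2 phi3); auto.
  - realify. ring.
  - intros u Hu. destruct (proj1 Hsol u Hu) as [_ [E _]]. rewrite <- E.
    assert (A := HRb _ (Hband (t0 + u) ltac:(lra))). assert (B := Hband (t0 + u) ltac:(lra)). split; lra.
Qed.

Lemma Q_zero t : t0 <= t < T -> Q t = 0.
Proof.
  intros Ht. destruct (Req_dec t t0) as [->|Hne]; [apply Q_t0|].
  destruct (MVT_gen Q t0 t (fun _ => 0)) as [c [Hc E]]; rewrite Rmin_left, Rmax_right in * by lra.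
  - intros x Hx. apply Q_is_derive; lra.
  - intros x Hx. apply continuity_pt_filterlim, Q_continuous; lra.
  - rewrite Rmult_0_l, Q_t0 in E. lra.
Qed.

(* [Q t = 0] says that [N + P + Z - NT] is exactly minus the (discounted) mass of the
   juveniles born in [[U t, t]], a window of length at most [m / Rlo]. *)
Lemma mass_defect_bound t : t0 <= t < T ->
  forall B, (forall v, t - delay Rr t (fun u => P (t + u)) m <= v <= t ->
              Rabs (gamma * g * Z v * h (P v)) <= B) ->
  Rabs (N t + P t + Z t - NT) <= m / Rlo * B.
Proof.
  intros Ht B HB.
  rewrite delay_window in HB by lra. replace (t - (t - U t)) with (U t) in HB by ring.
  destruct (U_bounds t ltac:(lra)) as [HU0 [HU1 HU2]].
  assert (Hmr : 0 < m / Rhi) by (apply Rdiv_lt_0_compat; [lra| assert (Bq := rate_bounds 0); lra]).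
  assert (HBp : 0 <= B) by (assert (A := HB t ltac:(lra)); assert (0 <= Rabs (gamma * g * Z t * h (P t))) by apply Rabs_pos; lra).
  assert (HQ := Q_zero t Ht). unfold Q, births in HQ.
  rewrite <- (RInt_Chasles_R birth birth_continuous 0 (U t) t) in HQ.
  assert (Hbd : Rabs (RInt birth (U t) t) <= (t - U t) * (exp (delta0 * t) * B)).
  { apply abs_RInt_le_const; [lra| apply ex_RInt_continuous_R, birth_continuous|].
    intros v Hv. unfold birth. rewrite frozen_Z_eq, frozen_P_eq by lra.
    rewrite Rabs_mult, (Rabs_pos_eq (exp _)) by (left; apply exp_pos).
    apply Rmult_le_compat; [left; apply exp_pos| apply Rabs_pos| apply exp_le_compat; nra| apply HB; lra]. }
  assert (He : 0 < exp (delta0 * t)) by apply exp_pos.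
  assert (Eq : exp (delta0 * t) * (N t + P t + Z t - NT) = - RInt birth (U t) t).
  { revert HQ. realify. intros HQ. lra. }
  assert (A : exp (delta0 * t) * Rabs (N t + P t + Z t - NT) <= (t - U t) * (exp (delta0 * t) * B)).
  { rewrite <- (Rabs_pos_eq (exp (delta0 * t))) at 1 by lra. rewrite <- Rabs_mult, Eq, Rabs_Ropp. auto. }
  assert (A2 : Rabs (N t + P t + Z t - NT) <= (t - U t) * B) by nra.
  assert (A3 : (t - U t) * B <= m / Rlo * B) by (apply Rmult_le_compat_r; lra).
  lra.
Qed.

End ConservationLaw.

(** * Stability of [E1] *)

Section Stability.
Variables (mu lambda g gamma delta delta0 m NT : R) (f h Rr : R -> R) (NT1 P2 : R).
Hypothesis Hlambda : 0 < lambda.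
Hypothesis Hmu : lambda < mu.
Hypothesis Hg : 0 < g.
Hypothesis Hgamma : 0 < gamma.
Hypothesis Hdelta0 : 0 <= delta0.
Hypothesis Hm : 0 < m.
Hypothesis Hf_incr : forall x y, 0 < x -> x < y -> f x < f y.
Hypothesis Hh_incr : forall x y, 0 < x -> x < y -> h x < h y.
Hypothesis Hh_nonneg : forall x, 0 <= x -> 0 <= h x.
Hypothesis Hh_cont : forall x, 0 < x -> continuous h x.
Hypothesis HR_cont : forall x, 0 < x -> continuous Rr x.
Hypothesis HR_pos : forall x, 0 < x -> 0 < Rr x.
Hypothesis HR_mono : forall x y, 0 < x -> x <= y -> Rr x <= Rr y.
Hypothesis HNT1 : 0 < NT1.
Hypothesis HfNT1 : f NT1 = lambda / mu.
Hypothesis HP2 : 0 < P2.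
Hypothesis HP2eq : gamma * g * exp (- delta0 * m / Rr P2) * h P2 = delta.
Hypothesis Hlow : NT1 < NT.
Hypothesis Hhigh : NT < NT1 + P2.

Let P1 := NT - NT1.

Lemma P1_pos : 0 < P1.
Proof. unfold P1. lra. Qed.

(* Gain of the delayed term of the [Z]-equation when [P] stays within [r] of [P1]: largest
   ratio of maturation speeds, survival over the shortest delay [m / Rr (P1 + r)], and
   grazing yield [gamma g h] at the largest [P]. *)
Definition worst_gain (r : R) : R :=
  Rr (P1 + r) / Rr (P1 - r) * exp (- delta0 * m / Rr (P1 + r)) * gamma * g * h (P1 + r).

(* [N_T < N_T2] means exactly that the equilibrium recruitment at [P1] is below [delta]. *)
Lemma worst_gain_0 : worst_gain 0 < delta.
Proof.
  assert (HP1 := P1_pos). assert (HP12 : P1 < P2) by (unfold P1; lra).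
  unfold worst_gain. rewrite Rplus_0_r, Rminus_0_r.
  assert (Hr1 := HR_pos P1 HP1). assert (Hr2 := HR_pos P2 HP2).
  assert (HR12 : Rr P1 <= Rr P2) by (apply HR_mono; lra).
  assert (Hh12 : h P1 < h P2) by (apply Hh_incr; lra).
  assert (He : exp (- delta0 * m / Rr P1) <= exp (- delta0 * m / Rr P2)).
  { apply exp_le_compat. unfold Rdiv.
    assert (/ Rr P2 <= / Rr P1) by (apply Rinv_le_contravar; lra).
    assert (0 <= delta0 * m) by nra. nra. }
  assert (E0 := exp_pos (- delta0 * m / Rr P1)).
  assert (H0 := Hh_nonneg P1 ltac:(lra)).
  replace (Rr P1 / Rr P1) with 1 by (field; lra). rewrite <- HP2eq.
  assert (exp (- delta0 * m / Rr P1) * h P1 < exp (- delta0 * m / Rr P2) * h P2).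
  { apply Rlt_le_trans with (exp (- delta0 * m / Rr P1) * h P2); [apply Rmult_lt_compat_l; lra|].
    apply Rmult_le_compat_r; [apply Hh_nonneg; lra| auto]. }
  assert (0 < gamma * g) by nra. nra.
Qed.

Lemma worst_gain_continuous_0 : continuous worst_gain 0.
Proof.
  assert (HP1 := P1_pos). assert (HR1 := HR_pos P1 HP1).
  assert (Hp : continuous (fun r => P1 + r) 0) by (apply (continuous_Rplus (fun _ => P1)); [apply continuous_const| apply continuous_id]).
  assert (Hn : continuous (fun r => P1 - r) 0) by (apply (continuous_Rminus (fun _ => P1)); [apply continuous_const| apply continuous_id]).
  assert (HRp : continuous (fun r => Rr (P1 + r)) 0) by (apply (continuous_comp (fun r => P1 + r) Rr); auto; apply HR_cont; lra).
  assert (HRn : continuous (fun r => Rr (P1 - r)) 0) by (apply (continuous_comp (fun r => P1 - r) Rr); auto; apply HR_cont; lra).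
  unfold worst_gain.
  apply continuous_Rmult; [apply continuous_Rmult; [apply continuous_Rmult; [apply continuous_Rmult|]|]|].
  - apply continuous_Rdiv; auto. rewrite Rminus_0_r. lra.
  - apply continuous_exp_comp, continuous_Rdiv; [apply continuous_const| auto|]. rewrite Rplus_0_r. lra.
  - apply continuous_const.
  - apply continuous_const.
  - apply (continuous_comp (fun r => P1 + r) h); auto. apply Hh_cont; lra.
Qed.

Lemma exists_band_radius : exists rho, 0 < rho /\ rho <= P1 / 2 /\ rho <= NT1 / 2 /\ worst_gain rho < delta.
Proof.
  assert (HP1 := P1_pos). assert (H0 := worst_gain_0).
  destruct (continuous_eps_delta _ 0 worst_gain_continuous_0 (delta - worst_gain 0) ltac:(lra)) as [d [Hd Hc]].
  set (rho := Rmin (Rmin (P1 / 2) (NT1 / 2)) (d / 2)).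
  assert (A1 := Rmin_l (Rmin (P1 / 2) (NT1 / 2)) (d / 2)). assert (A2 := Rmin_r (Rmin (P1 / 2) (NT1 / 2)) (d / 2)).
  assert (A3 := Rmin_l (P1 / 2) (NT1 / 2)). assert (A4 := Rmin_r (P1 / 2) (NT1 / 2)).
  assert (Hr : 0 < rho) by (unfold rho; repeat apply Rmin_pos; lra).
  exists rho. repeat split; try (unfold rho in *; lra).
  specialize (Hc rho ltac:(rewrite Rminus_0_r, Rabs_pos_eq; unfold rho in *; lra)). apply Rabs_def2 in Hc. lra.
Qed.

Let Pdot := fun n p z => mu * p * f n - lambda * p - g * z * h p.

(* Lower bound for [|mu f(N) - lambda|], the per-capita growth rate of [P] at [Z = 0],
   when [N] is at least [s/2] away from [N_T1]. *)
Let growth_margin := fun s => Rmin (lambda - mu * f (NT1 - s / 2)) (mu * f (NT1 + s / 2) - lambda).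

Lemma growth_margin_pos s : 0 < s <= NT1 -> 0 < growth_margin s.
Proof.
  intros Hs. assert (Hmu0 : 0 < mu) by lra.
  assert (HE : mu * f NT1 = lambda) by (rewrite HfNT1; field; lra).
  apply Rmin_pos.
  - assert (f (NT1 - s / 2) < f NT1) by (apply Hf_incr; lra). nra.
  - assert (f NT1 < f (NT1 + s / 2)) by (apply Hf_incr; lra). nra.
Qed.

Section Band.
Variable rho : R.
Hypothesis Hrho : 0 < rho.
Hypothesis Hrho_P1 : rho <= P1 / 2.
Hypothesis Hrho_NT1 : rho <= NT1 / 2.

Let Plo := P1 - rho.
Let Pup := P1 + rho.
Let hmax := h Pup.

Lemma h_band_bounds x : Plo <= x <= Pup -> 0 <= h x <= hmax.
Proof.
  intros Hx. assert (HP1 := P1_pos). split; [apply Hh_nonneg; unfold Plo in *; lra|].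
  apply increasing_le_compat; auto; unfold Plo, Pup in *; lra.
Qed.

Lemma hmax_nonneg : 0 <= hmax.
Proof. apply (h_band_bounds Pup). assert (HP1 := P1_pos). unfold Plo, Pup. lra. Qed.

Let Z_tolerance := fun s => P1 * growth_margin s / (4 * g * (hmax + 1)).

Lemma Z_tolerance_pos s : 0 < s <= rho -> 0 < Z_tolerance s.
Proof.
  intros Hs. assert (HP1 := P1_pos). assert (HH := hmax_nonneg).
  apply Rdiv_lt_0_compat; [apply Rmult_lt_0_compat; [lra| apply growth_margin_pos; lra]| nra].
Qed.

(* Near the edges of the [s]-band around [P1], the predator-free growth term dominates
   the grazing term, pushing [P] back towards [P1] at a speed bounded below. *)
Lemma drift_bounds s n p z : 0 < s <= rho -> Rabs (NT - n - p) <= s / 2 -> Rabs z <= Z_tolerance s ->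
  (P1 + s <= p <= Pup -> Pdot n p z <= - (P1 * growth_margin s / 4)) /\
  (Plo <= p <= P1 - s -> P1 * growth_margin s / 4 <= Pdot n p z).
Proof.
  intros Hs He Hz. assert (HP1 := P1_pos).
  assert (Ha := growth_margin_pos s ltac:(lra)).
  assert (Ha1 : growth_margin s <= lambda - mu * f (NT1 - s / 2)) by apply Rmin_l.
  assert (Ha2 : growth_margin s <= mu * f (NT1 + s / 2) - lambda) by apply Rmin_r.
  assert (HH := hmax_nonneg).
  assert (Hgz : forall p', Plo <= p' <= Pup -> Rabs (g * z * h p') <= P1 * growth_margin s / 4).
  { intros p' Hp'. destruct (h_band_bounds p' Hp') as [B1 B2].
    rewrite !Rabs_mult, (Rabs_pos_eq g), (Rabs_pos_eq (h p')) by lra.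
    assert (Hz' : Rabs z * (4 * g * (hmax + 1)) <= P1 * growth_margin s).
    { unfold Z_tolerance in Hz. apply Rle_div_r in Hz; [lra| nra]. }
    assert (0 <= Rabs z) by apply Rabs_pos.
    assert (Rabs z * h p' <= Rabs z * (hmax + 1)) by (apply Rmult_le_compat_l; lra). nra. }
  apply Rabs_le_between in He. assert (HP1def : P1 = NT - NT1) by reflexivity. unfold Pdot, Plo, Pup in *.
  split; intros Hp; specialize (Hgz p ltac:(lra)); apply Rabs_le_between in Hgz;
    replace (mu * p * f n - lambda * p - g * z * h p) with (p * (mu * f n - lambda) - g * z * h p) by ring.
  - assert (A1 : f n <= f (NT1 - s / 2)) by (apply increasing_le_compat; auto; lra).
    assert (A2 : mu * f n - lambda <= - growth_margin s) by (assert (mu * f n <= mu * f (NT1 - s / 2)) by (apply Rmult_le_compat_l; lra); lra).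
    assert (A3 : p * (mu * f n - lambda) <= - P1 * growth_margin s) by nra.
    assert (0 < P1 * growth_margin s) by nra. lra.
  - assert (A1 : f (NT1 + s / 2) <= f n) by (apply increasing_le_compat; auto; lra).
    assert (A2 : growth_margin s <= mu * f n - lambda) by (assert (mu * f (NT1 + s / 2) <= mu * f n) by (apply Rmult_le_compat_l; lra); lra).
    assert (A3 : P1 / 2 * growth_margin s <= p * (mu * f n - lambda)) by nra.
    assert (0 < P1 * growth_margin s) by nra. lra.
Qed.

Let Rlo := Rr Plo.
Let Rhi := Rr Pup.
Let tmax := m / Rlo.

Lemma Rr_band_bounds x : Plo <= x <= Pup -> Rlo <= Rr x <= Rhi.
Proof. intros Hx. assert (HP1 := P1_pos). unfold Rlo, Rhi, Plo, Pup in *. split; apply HR_mono; lra. Qed.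

Lemma Plo_pos : 0 < Plo.
Proof. assert (HP1 := P1_pos). unfold Plo. lra. Qed.

Lemma Rlo_pos : 0 < Rlo.
Proof. apply HR_pos, Plo_pos. Qed.

Lemma min_delay_pos : 0 < m / Rhi.
Proof.
  assert (Hl := Rlo_pos). assert (HP1 := P1_pos).
  assert (A := Rr_band_bounds Pup ltac:(unfold Plo, Pup; lra)).
  apply Rdiv_lt_0_compat; lra.
Qed.

Lemma tmax_pos : 0 < tmax.
Proof. apply Rdiv_lt_0_compat; [lra| apply Rlo_pos]. Qed.

Lemma worst_gain_nonneg : 0 <= worst_gain rho.
Proof.
  assert (HR := Rr_band_bounds Plo). assert (HR' := Rr_band_bounds Pup). assert (HH := hmax_nonneg).
  assert (Hl := Rlo_pos). unfold Rlo, Rhi, hmax, Plo, Pup in *.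
  unfold worst_gain. assert (HP1 := P1_pos).
  specialize (HR ltac:(lra)). specialize (HR' ltac:(lra)).
  apply Rmult_le_pos; [|lra]. apply Rmult_le_pos; [|lra]. apply Rmult_le_pos; [|lra].
  apply Rmult_le_pos; [apply Rdiv_le_0_compat; lra| left; apply exp_pos].
Qed.

Lemma delayed_recruitment_bound p pv tau z : Plo <= p <= Pup -> Plo <= pv <= Pup -> m / Rhi <= tau ->
  Rabs (Rr p * exp (- delta0 * tau) * (gamma * g * z * h pv / Rr pv)) <= worst_gain rho * Rabs z.
Proof.
  intros Hp Hpv Htau.
  assert (Bp := Rr_band_bounds p Hp). assert (Bv := Rr_band_bounds pv Hpv).
  assert (Hv := h_band_bounds pv Hpv). assert (Hl := Rlo_pos).
  assert (Hexp : exp (- delta0 * tau) <= exp (- delta0 * m / Rhi)).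
  { apply exp_le_compat. replace (- delta0 * m / Rhi) with (- delta0 * (m / Rhi)) by (field; lra). nra. }
  assert (Hratio : Rr p / Rr pv <= Rhi / Rlo).
  { unfold Rdiv. apply Rmult_le_compat; try lra; [left; apply Rinv_0_lt_compat; lra| apply Rinv_le_contravar; lra]. }
  replace (Rr p * exp (- delta0 * tau) * (gamma * g * z * h pv / Rr pv))
    with (Rr p / Rr pv * exp (- delta0 * tau) * gamma * g * h pv * z) by (field; lra).
  assert (E0 : 0 <= Rr p / Rr pv) by (apply Rdiv_le_0_compat; lra).
  assert (Ex := exp_pos (- delta0 * tau)).
  rewrite Rabs_mult. apply Rmult_le_compat_r; [apply Rabs_pos|].
  assert (Hpos : 0 <= Rr p / Rr pv * exp (- delta0 * tau) * gamma * g * h pv)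
    by (apply Rmult_le_pos; [apply Rmult_le_pos; [apply Rmult_le_pos; [apply Rmult_le_pos|]|]|]; lra).
  rewrite Rabs_pos_eq by exact Hpos.
  unfold worst_gain. fold Plo Pup Rlo Rhi hmax.
  apply Rmult_le_compat; [apply Rmult_le_pos; [apply Rmult_le_pos; [apply Rmult_le_pos|]|]; lra| lra| |lra].
  apply Rmult_le_compat_r; [lra|]. apply Rmult_le_compat_r; [lra|].
  apply Rmult_le_compat; lra.
Qed.

Section Rate.
Variable kap : R.
Hypothesis Hkap : 0 < kap.
Hypothesis Hkey : worst_gain rho * exp (kap * tmax) < delta - kap.

Section Tolerance.
Variable eps : R.
Hypothesis Heps : 0 < eps.

Let sig := Rmin (rho / 2) (eps / 4).
(* By the conservation law, [|Z| <= zeta] on a delay window gives [|N_T - N - P| <= Cz zeta]. *)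
Let Cz := 1 + tmax * (gamma * g * hmax).
Let eta := Rmin (Rmin (sig / (2 * Cz)) (Z_tolerance sig)) (Rmin sig (eps / 4)).

Lemma sig_bounds : 0 < sig /\ sig <= rho / 2 /\ sig <= eps / 4.
Proof. unfold sig. split; [apply Rmin_pos; lra| split; [apply Rmin_l| apply Rmin_r]]. Qed.

Lemma Cz_ge_1 : 1 <= Cz.
Proof.
  assert (HT := tmax_pos). assert (HH := hmax_nonneg).
  assert (0 <= tmax * (gamma * g * hmax)) by (apply Rmult_le_pos; [lra| repeat apply Rmult_le_pos; lra]).
  unfold Cz. lra.
Qed.

Lemma eta_bounds : 0 < eta /\ eta * Cz <= sig / 2 /\ eta <= Z_tolerance sig /\ eta <= sig /\ eta <= eps / 4.
Proof.
  destruct sig_bounds as [Hs0 [Hs1 Hs2]]. assert (HC := Cz_ge_1).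
  assert (Hz := Z_tolerance_pos sig ltac:(lra)).
  assert (A1 := Rmin_l (Rmin (sig / (2 * Cz)) (Z_tolerance sig)) (Rmin sig (eps / 4))).
  assert (A2 := Rmin_r (Rmin (sig / (2 * Cz)) (Z_tolerance sig)) (Rmin sig (eps / 4))).
  assert (A3 := Rmin_l (sig / (2 * Cz)) (Z_tolerance sig)). assert (A4 := Rmin_r (sig / (2 * Cz)) (Z_tolerance sig)).
  assert (A5 := Rmin_l sig (eps / 4)). assert (A6 := Rmin_r sig (eps / 4)).
  assert (0 < sig / (2 * Cz)) by (apply Rdiv_lt_0_compat; lra).
  fold eta in A1, A2. split; [unfold eta; repeat apply Rmin_pos; lra|].
  split; [|repeat split; lra].
  assert (eta <= sig / (2 * Cz)) by lra.
  apply Rle_div_r in H0; lra.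
Qed.

Section Solution.
Variables (t0 : R) (phi1 phi2 phi3 N P Z : R -> R).
Hypothesis HinD : in_D g gamma delta0 m NT h Rr t0 phi1 phi2 phi3.
Hypothesis Hnear : forall u, - t0 <= u <= 0 ->
  Rabs (phi1 u - NT1) < eta /\ Rabs (phi2 u - P1) < eta /\ Rabs (phi3 u) < eta.
Hypothesis Hsol : is_TDE_solution mu lambda g gamma delta delta0 m NT f h Rr t0 phi1 phi2 phi3 N P Z.

Let tau := fun t => delay Rr t (fun u => P (t + u)) m.
Let in_band_until T1 := forall r, t0 <= r <= T1 -> Rabs (P r - P1) <= sig.

Lemma t0_pos : 0 < t0.
Proof. apply HinD. Qed.

Lemma history_near v : 0 <= v <= t0 -> Rabs (Z v) < eta /\ Rabs (P v - P1) < eta.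
Proof.
  intros Hv. destruct (proj1 Hsol (v - t0) ltac:(lra)) as [_ [E2 E3]].
  replace (t0 + (v - t0)) with v in E2, E3 by ring. rewrite E2, E3.
  destruct (Hnear (v - t0) ltac:(lra)) as [_ [A2 A3]]. auto.
Qed.

Lemma P_is_derive t : t0 < t -> is_derive P t (Pdot (N t) (P t) (Z t)).
Proof. intros Ht. apply (proj2 (proj2 (proj2 (proj2 Hsol))) t Ht). Qed.

Lemma P_continuous_after x : t0 <= x -> continuity_pt P x.
Proof.
  intros Hx. apply continuity_pt_filterlim, (continuous_from_interior 0); [apply Hsol|].
  assert (H := t0_pos). lra.
Qed.

Lemma Z_continuous_after x : t0 <= x -> continuity_pt Z x.
Proof.
  intros Hx. apply continuity_pt_filterlim, (continuous_from_interior 0); [apply Hsol|].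
  assert (H := t0_pos). lra.
Qed.

Lemma band_until_history T1 v : t0 <= T1 -> in_band_until T1 -> 0 <= v <= T1 -> Plo <= P v <= Pup.
Proof.
  intros HT1 Hb Hv. destruct sig_bounds as [Hs0 [Hs1 _]]. destruct eta_bounds as [He0 [_ [_ [He3 _]]]].
  unfold Plo, Pup. destruct (Rle_dec v t0) as [Hvt|Hvt].
  - destruct (history_near v ltac:(lra)) as [_ A]. apply Rabs_def2 in A. lra.
  - specialize (Hb v ltac:(lra)). apply Rabs_le_between in Hb. lra.
Qed.

(* By continuity the band [[Plo, Pup]] (twice as wide as the [sig]-band) persists a little
   beyond [T1], as the conservation law requires a strictly larger horizon. *)
Lemma band_extension T1 : t0 <= T1 -> in_band_until T1 ->
  exists T, T1 < T /\ forall x, 0 <= x <= T -> Plo <= P x <= Pup.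
Proof.
  intros HT1 Hb. destruct sig_bounds as [Hs0 [Hs1 _]].
  destruct (continuous_eps_delta P T1 (proj1 (continuity_pt_filterlim _ _) (P_continuous_after T1 HT1)) (rho / 2))
    as [d [Hd HPd]]; [lra|].
  exists (T1 + d / 2). split; [lra|]. intros x Hx.
  destruct (Rle_dec x T1); [apply (band_until_history T1); auto; lra|].
  specialize (HPd x ltac:(rewrite Rabs_pos_eq; lra)). apply Rabs_def2 in HPd.
  specialize (Hb T1 ltac:(lra)). apply Rabs_le_between in Hb. unfold Plo, Pup. lra.
Qed.

Lemma delay_window_until T t : t0 < T -> (forall x, 0 <= x <= T -> Plo <= P x <= Pup) -> t0 <= t <= T ->
  0 <= t - tau t /\ m / Rhi <= tau t <= tmax.
Proof.
  intros HT Hb Ht.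
  exact (delay_bounds mu lambda g gamma delta delta0 m NT f h Rr t0 phi1 phi2 phi3 N P Z T Plo Pup Rlo Rhi
           t0_pos HT Plo_pos Rlo_pos Hm HR_cont Rr_band_bounds Hb HinD Hsol t Ht).
Qed.

Lemma Z_decay_until T1 : t0 <= T1 -> in_band_until T1 ->
  forall t, t0 <= t <= T1 -> Rabs (Z t) < eta * exp (- kap * (t - t0)).
Proof.
  intros HT1 Hb. destruct (band_extension T1 HT1 Hb) as [T [HT Hband]].
  destruct eta_bounds as [He0 _].
  apply (halanay_estimate Z
    (fun t => Rr (P t) * exp (- delta0 * tau t) * (gamma * g * Z (t - tau t) * h (P (t - tau t)) / Rr (P (t - tau t)))
              - delta * Z t)
    (fun t => t - tau t) t0 T1 eta (worst_gain rho) delta kap tmax);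
    auto using t0_pos, worst_gain_nonneg.
  - left; apply tmax_pos.
  - intros x Hx. apply Z_continuous_after; lra.
  - intros s Hs. apply history_near; auto.
  - intros t Ht.
    destruct (proj2 (proj2 (proj2 (proj2 Hsol))) t ltac:(lra)) as [_ [_ dZ]].
    destruct (delay_window_until T t ltac:(lra) Hband ltac:(lra)) as [C1 [C2 C3]].
    assert (Hmin := min_delay_pos).
    split; [exact dZ|]. split; [split; lra|]. split; [lra|].
    unfold Rminus at 1. rewrite Rplus_assoc, Rplus_opp_l, Rplus_0_r.
    apply delayed_recruitment_bound; auto; apply Hband; lra.
Qed.

Lemma mass_defect_until T1 : t0 <= T1 -> in_band_until T1 -> forall t zeta, t0 <= t <= T1 ->
  (forall v, 0 <= v -> t - tmax <= v <= t -> Rabs (Z v) <= zeta) ->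
  Rabs (N t + P t + Z t - NT) <= tmax * (gamma * g * zeta * hmax).
Proof.
  intros HT1 Hb t zeta Ht Hz. destruct (band_extension T1 HT1 Hb) as [T [HT Hband]].
  apply (mass_defect_bound mu lambda g gamma delta delta0 m NT f h Rr t0 phi1 phi2 phi3 N P Z T Plo Pup Rlo Rhi);
    auto using t0_pos, Plo_pos, Rlo_pos, Rr_band_bounds; try lra.
  intros v Hv. fold (tau t) in Hv.
  destruct (delay_window_until T t ltac:(lra) Hband ltac:(lra)) as [C1 [C2 C3]].
  destruct (h_band_bounds _ (Hband v ltac:(lra))) as [h1 h2].
  specialize (Hz v ltac:(lra) ltac:(lra)).
  rewrite !Rabs_mult, (Rabs_pos_eq gamma), (Rabs_pos_eq g), (Rabs_pos_eq (h _)) by lra.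
  apply Rmult_le_compat; try lra; [apply Rmult_le_pos; [nra| apply Rabs_pos]|].
  apply Rmult_le_compat_l; [nra| auto].
Qed.

Lemma Z_small_until T1 : t0 <= T1 -> in_band_until T1 -> forall v, 0 <= v <= T1 -> Rabs (Z v) < eta.
Proof.
  intros HT1 Hb v Hv. destruct (Rle_dec v t0) as [Hvt|Hvt]; [apply history_near; lra|].
  assert (A := Z_decay_until T1 HT1 Hb v ltac:(lra)).
  assert (exp (- kap * (v - t0)) <= 1) by (rewrite <- exp_0; apply exp_le_compat; nra).
  destruct eta_bounds as [He0 _]. nra.
Qed.

Lemma defect_small_until T1 : t0 <= T1 -> in_band_until T1 -> forall t, t0 <= t <= T1 ->
  Rabs (NT - N t - P t) <= sig / 2 /\ Rabs (Z t) <= Z_tolerance sig.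
Proof.
  intros HT1 Hb t Ht. destruct eta_bounds as [He0 [HeC [HeZ _]]].
  assert (HZ := Z_small_until T1 HT1 Hb t ltac:(assert (H := t0_pos); lra)).
  split; [|lra].
  assert (HC := mass_defect_until T1 HT1 Hb t eta Ht
                  ltac:(intros v Hv0 Hv; left; apply (Z_small_until T1); auto; lra)).
  replace (NT - N t - P t) with (Z t - (N t + P t + Z t - NT)) by ring.
  eapply Rle_trans; [apply Rabs_triang|]. rewrite Rabs_Ropp.
  assert (eta + tmax * (gamma * g * eta * hmax) = eta * Cz) by (unfold Cz; ring). lra.
Qed.

Lemma P_in_band t : t0 <= t -> Rabs (P t - P1) < sig.
Proof.
  intros Ht. destruct sig_bounds as [Hs0 [Hs1 _]]. destruct eta_bounds as [_ [_ [_ [He3 _]]]].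
  assert (HP1 := P1_pos).
  apply (stays_in_band P (fun t => Pdot (N t) (P t) (Z t)) t0 t P1 sig); try lra.
  - intros x Hx. apply P_continuous_after; lra.
  - assert (A := history_near t0 ltac:(assert (H := t0_pos); lra)). lra.
  - intros x Hx. apply P_is_derive; lra.
  - intros t1 Ht1 Hb1.
    destruct (defect_small_until t1 ltac:(lra) Hb1 t1 ltac:(lra)) as [He HZ].
    assert (HaF := growth_margin_pos sig ltac:(lra)).
    destruct (drift_bounds sig (N t1) (P t1) (Z t1) ltac:(lra) He HZ) as [S1 S2].
    split; intros E; [specialize (S1 ltac:(unfold Pup; lra))| specialize (S2 ltac:(unfold Plo; lra))]; nra.
Qed.

Lemma in_band_forever T1 : in_band_until T1.
Proof. intros r Hr. left. apply P_in_band. lra. Qed.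

Lemma defect_bound t zeta : t0 <= t ->
  (forall v, 0 <= v -> t - tmax <= v <= t -> Rabs (Z v) <= zeta) ->
  Rabs (N t + P t + Z t - NT) <= tmax * (gamma * g * zeta * hmax).
Proof. intros Ht. apply (mass_defect_until t); auto using in_band_forever; lra. Qed.

Lemma eventually_defect_small s : 0 < s <= sig -> exists T, t0 <= T /\ forall t, T <= t ->
  Rabs (NT - N t - P t) <= s / 2 /\ Rabs (Z t) <= Z_tolerance s /\ Rabs (Z t) <= s.
Proof.
  intros Hs. destruct sig_bounds as [Hs0 [Hs1 _]]. assert (HC := Cz_ge_1). assert (HT := tmax_pos).
  assert (Hz := Z_tolerance_pos s ltac:(lra)). destruct eta_bounds as [He0 _].
  set (zeta := Rmin (s / (2 * Cz)) (Z_tolerance s)).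
  assert (Hz1 := Rmin_l (s / (2 * Cz)) (Z_tolerance s)). assert (Hz2 := Rmin_r (s / (2 * Cz)) (Z_tolerance s)).
  assert (Hz0 : 0 < zeta) by (apply Rmin_pos; [apply Rdiv_lt_0_compat|]; lra).
  fold zeta in Hz1, Hz2.
  assert (HzC : zeta * Cz <= s / 2) by (apply Rle_div_r in Hz1; lra).
  destruct (exp_decay_eventually_le eta kap t0 zeta Hkap Hz0) as [T2 [HT2 Hdec]].
  assert (HZ2 : forall v, T2 <= v -> Rabs (Z v) <= zeta).
  { intros v Hv. left. eapply Rlt_le_trans; [apply (Z_decay_until v); auto using in_band_forever; lra| auto]. }
  exists (T2 + tmax). split; [lra|]. intros t Ht.
  assert (HZt := HZ2 t ltac:(lra)).
  assert (HD := defect_bound t zeta ltac:(lra) ltac:(intros v _ Hv; apply HZ2; lra)).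
  split; [|split; nra].
  replace (NT - N t - P t) with (Z t - (N t + P t + Z t - NT)) by ring.
  eapply Rle_trans; [apply Rabs_triang|]. rewrite Rabs_Ropp.
  assert (zeta + tmax * (gamma * g * zeta * hmax) = zeta * Cz) by (unfold Cz; ring). lra.
Qed.

Lemma eventually_near_equilibrium s : 0 < s <= sig -> exists T, forall t, T <= t ->
  Rabs (P t - P1) < s /\ Rabs (NT - N t - P t) <= s / 2 /\ Rabs (Z t) <= s.
Proof.
  intros Hs. destruct sig_bounds as [Hs0 [Hs1 _]]. assert (HP1 := P1_pos).
  destruct (eventually_defect_small s Hs) as [T3 [HT3 Hsmall]].
  assert (Ha := growth_margin_pos s ltac:(lra)).
  assert (Hk : 0 < P1 * growth_margin s / 4) by nra.
  assert (HPd : forall t, T3 < t -> is_derive P t (Pdot (N t) (P t) (Z t)))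
    by (intros t Ht; apply P_is_derive; lra).
  assert (Hdrift : forall t, T3 <= t ->
    (P1 + s <= P t -> Pdot (N t) (P t) (Z t) <= - (P1 * growth_margin s / 4)) /\
    (P t <= P1 - s -> P1 * growth_margin s / 4 <= Pdot (N t) (P t) (Z t))).
  { intros t Ht. destruct (Hsmall t Ht) as [He [HZ _]].
    assert (HB := P_in_band t ltac:(lra)). apply Rabs_def2 in HB.
    destruct (drift_bounds s (N t) (P t) (Z t) ltac:(lra) He HZ) as [S1 S2].
    split; intros E; [apply S1| apply S2]; unfold Plo, Pup; lra. }
  assert (Hcont : forall x, T3 <= x -> continuity_pt P x) by (intros x Hx; apply P_continuous_after; lra).
  destruct (enters_band P (fun t => Pdot (N t) (P t) (Z t)) T3 P1 s sig (P1 * growth_margin s / 4)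
              ltac:(lra) Hk Hcont HPd ltac:(intros t Ht; apply P_in_band; lra) Hdrift) as [t2 [Ht2 Hp2]].
  exists t2. intros t Ht. destruct (Hsmall t ltac:(lra)) as [He [_ HZ]]. split; auto.
  apply (stays_in_band P (fun t => Pdot (N t) (P t) (Z t)) t2 t P1 s); auto; try lra.
  - intros x Hx. apply Hcont; lra.
  - intros x Hx. apply HPd; lra.
  - intros t1 Ht1 _. destruct (Hdrift t1 ltac:(lra)) as [S1 S2].
    split; intros E; [specialize (S1 ltac:(lra))| specialize (S2 ltac:(lra))]; lra.
Qed.

Lemma stays_close t : t0 <= t -> sqrt ((N t - NT1) ^ 2 + (P t - P1) ^ 2 + Z t ^ 2) < eps.
Proof.
  intros Ht. destruct sig_bounds as [Hs0 [_ Hs2]]. destruct eta_bounds as [He0 [HeC [_ [_ He4]]]].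
  assert (HZ := Z_small_until t Ht (in_band_forever t) t ltac:(assert (H := t0_pos); lra)).
  assert (HP := P_in_band t Ht).
  assert (HD := defect_bound t eta Ht ltac:(intros v Hv0 Hv; left; apply (Z_small_until t); auto using in_band_forever; lra)).
  assert (HN : Rabs (N t - NT1) <= 3 * sig / 2).
  { replace (N t - NT1) with ((N t + P t + Z t - NT) + (- (P t - P1)) + (- Z t)) by (unfold P1; ring).
    eapply Rle_trans; [apply Rabs_triang|]. eapply Rle_trans; [apply Rplus_le_compat_r, Rabs_triang|].
    rewrite !Rabs_Ropp.
    assert (eta + tmax * (gamma * g * eta * hmax) = eta * Cz) by (unfold Cz; ring). lra. }
  apply sqrt_sum_sq_lt. lra.
Qed.

Lemma converges_to_equilibrium :
  is_lim N p_infty NT1 /\ is_lim P p_infty P1 /\ is_lim Z p_infty 0.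
Proof.
  destruct sig_bounds as [Hs0 _].
  assert (Hev : forall e, 0 < e -> exists T, forall t, T < t ->
            Rabs (P t - P1) < e / 3 /\ Rabs (NT - N t - P t) <= e / 3 /\ Rabs (Z t) <= e / 3).
  { intros e He. assert (Hm1 := Rmin_l sig (e / 3)). assert (Hm2 := Rmin_r sig (e / 3)).
    destruct (eventually_near_equilibrium (Rmin sig (e / 3))) as [T HT]; [split; [apply Rmin_pos|]; lra|].
    exists T. intros t Ht. destruct (HT t ltac:(lra)) as [A1 [A2 A3]]. repeat split; lra. }
  split; [|split]; apply is_lim_p_infty_eps; intros e He; destruct (Hev e He) as [T HT];
    exists T; intros t Ht; destruct (HT t Ht) as [A1 [A2 A3]].
  - replace (N t - NT1) with (- (NT - N t - P t) - (P t - P1)) by (unfold P1; ring).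
    eapply Rle_lt_trans; [apply Rabs_triang|]. rewrite !Rabs_Ropp. lra.
  - lra.
  - rewrite Rminus_0_r. lra.
Qed.

End Solution.

Lemma exists_stability_radius : exists eta0, 0 < eta0 /\
  forall (t0 : R) (phi1 phi2 phi3 : R -> R),
    in_D g gamma delta0 m NT h Rr t0 phi1 phi2 phi3 ->
    (forall u, - t0 <= u <= 0 ->
       Rabs (phi1 u - NT1) < eta0 /\ Rabs (phi2 u - P1) < eta0 /\ Rabs (phi3 u) < eta0) ->
    forall N P Z : R -> R,
      is_TDE_solution mu lambda g gamma delta delta0 m NT f h Rr t0 phi1 phi2 phi3 N P Z ->
      (forall t, t0 <= t -> sqrt ((N t - NT1) ^ 2 + (P t - P1) ^ 2 + (Z t) ^ 2) < eps) /\
      is_lim N p_infty NT1 /\ is_lim P p_infty P1 /\ is_lim Z p_infty 0.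
Proof.
  exists eta. split; [apply eta_bounds|].
  intros t0 phi1 phi2 phi3 HinD Hnear N P Z Hsol. split.
  - apply (stays_close t0 phi1 phi2 phi3); auto.
  - apply (converges_to_equilibrium t0 phi1 phi2 phi3); auto.
Qed.

End Tolerance.
End Rate.
End Band.

End Stability.

Theorem proposition5
  (mu lambda g gamma delta delta0 m NT : R)
  (f df h dh Rr dRr : R -> R) (Rinf NT1 P2 : R)
  (* standing assumptions on the constants *)
  (Hmu : mu > lambda) (Hlambda : lambda > 0) (Hg : g > 0)
  (Hgamma : 0 < gamma <= 1) (Hdelta : delta > 0) (Hgd : gamma * g > delta)
  (Hdelta0 : delta0 >= 0) (Hm : m > 0) (HNT : NT > 0)
  (* f *)
  (Hf_C1 : C1_nonneg f df) (Hf_nonneg : forall x, 0 <= x -> 0 <= f x)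
  (Hf0 : f 0 = 0) (Hdf : forall x, 0 <= x -> df x > 0)
  (Hf_lim : is_lim f p_infty 1)
  (* h *)
  (Hh_C1 : C1_nonneg h dh) (Hh_nonneg : forall x, 0 <= x -> 0 <= h x)
  (Hh0 : h 0 = 0) (Hdh : forall x, 0 <= x -> dh x > 0)
  (Hh_lim : is_lim h p_infty 1)
  (* R *)
  (HR_C1 : C1_nonneg Rr dRr) (HR_nonneg : forall x, 0 <= x -> 0 <= Rr x)
  (HdR : forall x, 0 <= x -> 0 <= dRr x)
  (HdR0 : Rr 0 = 0 -> dRr 0 > 0)
  (HR_lim : is_lim Rr p_infty Rinf)
  (* N_T1 = f^{-1}(lambda/mu) *)
  (HNT1 : 0 <= NT1) (HfNT1 : f NT1 = lambda / mu)
  (* P_2^* : the (unique) positive root, whose existence is assumed *)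
  (Hexist : delta0 = 0 \/ (delta0 > 0 /\ m < Rinf * ln (gamma * g / delta) / delta0))
  (HP2 : 0 < P2)
  (HP2eq : gamma * g * exp (- delta0 * m / Rr P2) * h P2 = delta)
  (* N_T1 < N_T < N_T2 = N_T1 + P_2^* *)
  (Hlow : NT1 < NT) (Hhigh : NT < NT1 + P2) :
  let N1 := NT1 in
  let P1 := NT - NT1 in
  forall eps, 0 < eps ->
  exists eta, 0 < eta /\
  forall (t0 : R) (phi1 phi2 phi3 : R -> R),
    in_D g gamma delta0 m NT h Rr t0 phi1 phi2 phi3 ->
    (forall u, - t0 <= u <= 0 ->
       Rabs (phi1 u - N1) < eta /\ Rabs (phi2 u - P1) < eta /\ Rabs (phi3 u) < eta) ->
    forall N P Z : R -> R,
      is_TDE_solution mu lambda g gamma delta delta0 m NT f h Rr t0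
        phi1 phi2 phi3 N P Z ->
      (forall t, t0 <= t ->
         sqrt ((N t - N1) ^ 2 + (P t - P1) ^ 2 + (Z t) ^ 2) < eps) /\
      is_lim N p_infty N1 /\ is_lim P p_infty P1 /\ is_lim Z p_infty 0.
Proof.
  intros N1 P1 eps Heps.
  assert (Hd0 : 0 <= delta0) by lra. assert (Hg0 : 0 < gamma) by lra.
  assert (Hf_incr := C1_nonneg_increasing f df Hf_C1 Hdf).
  assert (Hh_incr := C1_nonneg_increasing h dh Hh_C1 Hdh).
  assert (Hh_cont := C1_nonneg_continuous h dh Hh_C1).
  assert (HR_cont := C1_nonneg_continuous Rr dRr HR_C1).
  assert (HR_pos := C1_nonneg_pos Rr dRr HR_C1 HR_nonneg HdR HdR0).
  assert (HR_mono := C1_nonneg_nondecreasing Rr dRr HR_C1 HdR).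
  assert (HNT1_pos : 0 < NT1).
  { destruct HNT1 as [|E]; auto. rewrite <- E, Hf0 in HfNT1.
    assert (0 < lambda / mu) by (apply Rdiv_lt_0_compat; lra). lra. }
  destruct (exists_band_radius g gamma delta delta0 m NT h Rr NT1 P2)
    as [rho [Hrho [Hrho_P1 [Hrho_NT1 Hgain]]]]; auto.
  destruct (exists_decay_rate (worst_gain g gamma delta0 m NT h Rr NT1 rho) delta (m / Rr (NT - NT1 - rho)))
    as [kap [Hkap Hkey]].
  { split; auto. apply worst_gain_nonneg; auto. }
  apply (exists_stability_radius mu lambda g gamma delta delta0 m NT f h Rr NT1) with (rho := rho) (kap := kap); auto; lra.
Qed.
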